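(* Let $N\ge 1$ be an integer, $\phi\in(-\pi/2,\pi/2)$ and $\lambda\in\mathbb{C}$. Consider the two equations $$-e^{-2i\phi}w''(x)-(ix)^{N+2}e^{(N+2)i\phi}w(x)=\lambda w(x),\quad x\in\mathbb{R}_+=[0,\infty),$$ $$-e^{2i\phi}w''(x)-(ix)^{N+2}e^{-(N+2)i\phi}w(x)=\lambda w(x),\quad x\in\mathbb{R}_-=(-\infty,0].$$ For each of these two equations exactly one of the following holds, independently of $\lambda$: (I) If $\phi\neq -\frac{N+2}{2N+8}\pi+\frac{2k}{N+4}\pi$ for all $k\in\mathbb{Z}$, then the equation has, up to a constant multiple, exactly one nonzero solution $w$ with $w\in L^2(\mathbb{R}_\pm)$ (respectively), and in particular it has a solution not in $L^2(\mathbb{R}_\pm)$ (limit-point case). (II) If $\phi=-\frac{N+2}{2N+8}\pi+\frac{2k}{N+4}\pi$ for some $k\in\mathbb{Z}$, then all solutions of the equation lie in $L^2(\mathbb{R}_\pm)$ (limit-circle case).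
   Context: These equations arise from $-y''(z)-(iz)^{N+2}y(z)=\lambda y(z)$ on the contour $\Gamma=\{xe^{i\phi\,\mathrm{sgn}(x)}:x\in\mathbb{R}\}$ via $w(x)=y(xe^{i\phi\,\mathrm{sgn}(x)})$. Solutions are understood as functions $w$ with $w,w'$ locally absolutely continuous on the respective half-line. *)

From Stdlib Require Import Reals ZArith.
Open Scope R_scope.

Definition Cx : Type := (R * R)%type.
Definition Cre (z : Cx) : R := fst z.
Definition Cim (z : Cx) : R := snd z.
Definition Cadd (z w : Cx) : Cx := (Cre z + Cre w, Cim z + Cim w).
Definition Copp (z : Cx) : Cx := (- Cre z, - Cim z).
Definition Cmul (z w : Cx) : Cx :=
  (Cre z * Cre w - Cim z * Cim w, Cre z * Cim w + Cim z * Cre w).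
Fixpoint Cpow (z : Cx) (n : nat) : Cx :=
  match n with O => (1, 0) | S m => Cmul z (Cpow z m) end.
Definition Cexpi (t : R) : Cx := (cos t, sin t).
Definition Cnorm2 (z : Cx) : R := Cre z * Cre z + Cim z * Cim z.

Definition derivC (f g : R -> Cx) (x : R) : Prop :=
  derivable_pt_lim (fun t => Cre (f t)) x (Cre (g x)) /\
  derivable_pt_lim (fun t => Cim (f t)) x (Cim (g x)).

Definition solves (P : R -> Prop) (a : Cx) (q : R -> Cx) (lam : Cx)
    (w : R -> Cx) : Prop :=
  exists w1 w2 : R -> Cx, forall x, P x ->
    derivC w w1 x /\ derivC w1 w2 x /\
    Cadd (Copp (Cmul a (w2 x))) (Copp (Cmul (q x) (w x))) = Cmul lam (w x).

(* w is square integrable on the interval P: the integrals of |w|^2 over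
   all compact subintervals [a,b] of P are uniformly bounded. *)
Definition L2_on (P : R -> Prop) (w : R -> Cx) : Prop :=
  exists M : R, forall a b : R, P a -> P b -> a <= b ->
    forall pr : Riemann_integrable (fun t => Cnorm2 (w t)) a b,
      RiemannInt pr <= M.

Definition Rpos (x : R) : Prop := 0 < x.
Definition Rneg (x : R) : Prop := x < 0.

Definition a_plus (phi : R) : Cx := Cexpi (-2 * phi).
Definition q_plus (N : nat) (phi : R) (x : R) : Cx :=
  Cmul (Cpow (0, x) (N + 2)) (Cexpi (INR (N + 2) * phi)).
Definition a_minus (phi : R) : Cx := Cexpi (2 * phi).
Definition q_minus (N : nat) (phi : R) (x : R) : Cx :=
  Cmul (Cpow (0, x) (N + 2)) (Cexpi (- INR (N + 2) * phi)).

Definition exceptional (N : nat) (phi : R) : Prop :=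
  exists k : Z, phi = - (INR N + 2) / (2 * INR N + 8) * PI
                      + 2 * IZR k / (INR N + 4) * PI.

Definition limit_point (P : R -> Prop) (a : Cx) (q : R -> Cx) (lam : Cx) : Prop :=
  (exists w, solves P a q lam w /\ L2_on P w /\ (exists x, P x /\ w x <> (0, 0)) /\
     forall v, solves P a q lam v -> L2_on P v ->
       exists c : Cx, forall x, P x -> v x = Cmul c (w x)) /\
  (exists v, solves P a q lam v /\ ~ L2_on P v).

Definition limit_circle (P : R -> Prop) (a : Cx) (q : R -> Cx) (lam : Cx) : Prop :=
  forall w, solves P a q lam w -> L2_on P w.

(* Multiplying by -e^(+-2 i phi) and reflecting the negative half-line turns both equations
   into w'' = Q w on (0, oo) with Q(t) = -e^(i th) t^(N+2) + mu, and th is a multiple of 2 pi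
   exactly for the exceptional angles.

   If th is not in 2 pi Z, some unimodular z makes Re(z Q(t)) tend to +oo. Then
   Fz = Re(z conj(w) w') is increasing with Fz' >= dl (|w|^2 + |w'|^2): a solution is square
   integrable iff Fz <= 0 on [t0, oo), while once Fz > 0 a multiple of 2 t + 1/Fz grows
   linearly and has derivative at most |w|^2. Two L^2 solutions
   have vanishing Wronskian (otherwise a combination has Fz(t0) > 0), hence are proportional;
   solutions vanishing at t0 + n have Fz <= 0 up to t0 + n and converge, after normalization,
   to an L^2 solution. This is the limit-point case.

   If th is in 2 pi Z, Q(t) = mu - t^(N+2), and a Liouville-type energy
   |w'|^2 / r + r |w|^2 + al Re(conj(w) w') with r = t^((N+2)/2) is bounded by Gronwall's
   inequality, so |w(t)|^2 = O(t^(-3/2)) and every solution is L^2: the limit-circle case.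
   Solutions with Wronskian 1 are provided by power series. *)

From Stdlib Require Import Reals ZArith Lra Lia Classical FunctionalExtensionality IndefiniteDescription.
From Coquelicot Require Import Rcomplements Rbar Hierarchy Derive RInt RInt_analysis Continuity AutoDerive ElemFct PSeries.
Open Scope R_scope.

Arguments Rplus : simpl never.
Arguments Rmult : simpl never.
Arguments Ropp : simpl never.
Arguments Rinv : simpl never.
Arguments Rminus : simpl never.
Arguments Rdiv : simpl never.
Arguments IZR : simpl never.
Arguments Rabs : simpl never.
Arguments pow : simpl never.

Ltac rewrite_Derive :=
  repeat match goal with
  | |- context [Derive ?f ?x] =>
    let H := fresh in
    assert (H : Derive f x = _) by (apply is_derive_unique; eassumption); rewrite H; clear H
  end.

Ltac unfold_ops_all :=
  repeat progress (unfold scal, mult, opp, plus, minus, zero, one in *; simpl in * ).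

Ltac unfold_ops := repeat progress (unfold scal, mult, opp, plus, minus, zero, one; simpl).

Ltac ring_R := lazymatch goal with |- @eq _ ?a ?b => change (@eq R a b) end; ring.

(** * Calculus on the real line *)

Lemma is_derive_eq (f : R -> R) x l l' : is_derive f x l -> l = l' -> is_derive f x l'.
Proof. intros H ->; exact H. Qed.

Lemma le_of_derive_ge0 (f df : R -> R) a b : a <= b ->
  (forall x, a <= x <= b -> is_derive f x (df x) /\ 0 <= df x) -> f a <= f b.
Proof.
intros Hab H. destruct (Rle_lt_or_eq_dec _ _ Hab) as [Hlt|Heq]; [|subst; lra].
destruct (MVT_cor2 f df a b Hlt) as [c [Hc1 Hc2]].
- intros c Hc. apply is_derive_Reals. apply H; lra.
- assert (0 <= df c) by (apply H; lra). nra.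
Qed.

Lemma gronwall_forward (F dF H dH : R -> R) a b : a <= b ->
  (forall x, a <= x <= b -> is_derive F x (dF x) /\ is_derive H x (dH x) /\ dF x <= dH x * F x) ->
  F b <= F a * exp (H b - H a).
Proof.
intros Hab Hd.
set (Phi := fun x => - (F x * exp (- H x))).
assert (Phi a <= Phi b).
{ apply (le_of_derive_ge0 Phi (fun x => - ((dF x - dH x * F x) * exp (- H x)))); auto.
  intros x Hx. destruct (Hd x Hx) as [H1 [H2 H3]]. split.
  - unfold Phi. eapply is_derive_eq.
    + apply @is_derive_opp. apply (is_derive_mult F (fun x => exp (- H x))). exact H1.
      apply (is_derive_comp exp (fun x => - H x)). apply is_derive_exp. apply @is_derive_opp. exact H2.
      intros; apply Rmult_comm.
    + unfold_ops_all; ring.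
  - assert (0 < exp (- H x)) by apply exp_pos. nra. }
unfold Phi in H0.
assert (Hp : 0 < exp (H b)) by apply exp_pos.
replace (exp (H b - H a)) with (exp (H b) * exp (- H a)) by (rewrite <- exp_plus; f_equal; ring).
assert (F b * exp (- H b) <= F a * exp (- H a)) by lra.
replace (F b) with (F b * exp (- H b) * exp (H b)).
- nra.
- rewrite Rmult_assoc, <- exp_plus. replace (- H b + H b) with 0 by ring. rewrite exp_0; ring.
Qed.

Lemma gronwall_backward (F dF H dH : R -> R) a b : a <= b ->
  (forall x, a <= x <= b -> is_derive F x (dF x) /\ is_derive H x (dH x) /\ - (dH x * F x) <= dF x) ->
  F a <= F b * exp (H b - H a).
Proof.
intros Hab Hd.
set (Phi := fun x => (F x * exp (H x))).
assert (Phi a <= Phi b).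
{ apply (le_of_derive_ge0 Phi (fun x => ((dF x + dH x * F x) * exp (H x)))); auto.
  intros x Hx. destruct (Hd x Hx) as [H1 [H2 H3]]. split.
  - unfold Phi. eapply is_derive_eq.
    + apply (is_derive_mult F (fun x => exp (H x))). exact H1.
      apply (is_derive_comp exp H). apply is_derive_exp. exact H2.
      intros; apply Rmult_comm.
    + unfold_ops_all; ring.
  - assert (0 < exp (H x)) by apply exp_pos. nra. }
unfold Phi in H0.
replace (exp (H b - H a)) with (exp (H b) * exp (- H a)) by (rewrite <- exp_plus; f_equal; ring).
assert (Hp : 0 < exp (- H a)) by apply exp_pos.
replace (F a) with (F a * exp (H a) * exp (- H a)).
- nra.
- rewrite Rmult_assoc, <- exp_plus. replace (H a + - H a) with 0 by ring. rewrite exp_0; ring.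
Qed.

Lemma is_derive_linear (L x : R) : is_derive (fun y => L * y) x L.
Proof. auto_derive. auto. ring. Qed.

Lemma continuity_pt_iff_continuous (f : R -> R) x : continuity_pt f x <-> continuous f x.
Proof. rewrite continuity_pt_filterlim. reflexivity. Qed.

Lemma primitive_diff_le_RInt (f H h : R -> R) a b c d : c < a -> a <= b -> b < d ->
  (forall x, c < x < d -> continuous f x) ->
  (forall x, a <= x <= b -> is_derive H x (h x) /\ h x <= f x) ->
  H b - H a <= RInt f a b.
Proof.
intros Hca Hab Hbd Hc Hd.
assert (Hex : forall y, c < y < d -> ex_RInt f a y).
{ intros y Hy. apply (@ex_RInt_continuous R_CompleteNormedModule). intros z Hz. apply Hc.
  split. apply Rlt_le_trans with (Rmin a y). apply Rmin_glb_lt; lra. apply Hz.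
  apply Rle_lt_trans with (Rmax a y). apply Hz. apply Rmax_lub_lt; lra. }
set (K := fun x => RInt f a x - H x).
assert (K a <= K b).
{ apply (le_of_derive_ge0 K (fun x => f x - h x)); auto.
  intros x Hx. destruct (Hd x Hx) as [H1 H2]. split; [|lra].
  unfold K. eapply is_derive_eq.
  - apply @is_derive_minus; [|exact H1].
    apply (is_derive_RInt f (RInt f a) a x).
    + apply (locally_interval _ x c d); simpl; try lra.
      intros y Hy1 Hy2. apply (@RInt_correct R_CompleteNormedModule). apply Hex; lra.
    + apply Hc; lra.
  - unfold_ops_all. ring. }
unfold K in H0. rewrite RInt_point in H0. unfold zero in H0; simpl in H0. lra.
Qed.

Lemma RInt_le_primitive_diff (f H h : R -> R) a b c d : c < a -> a <= b -> b < d ->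
  (forall x, c < x < d -> continuous f x) ->
  (forall x, a <= x <= b -> is_derive H x (h x) /\ f x <= h x) ->
  RInt f a b <= H b - H a.
Proof.
intros Hca Hab Hbd Hc Hd.
assert (Hex : ex_RInt f a b).
{ apply (@ex_RInt_continuous R_CompleteNormedModule). intros z Hz. apply Hc. rewrite Rmin_left, Rmax_right
  in Hz; lra. }
assert (HH : - H b - - H a <= RInt (fun x => opp (f x)) a b).
{ apply (primitive_diff_le_RInt (fun x => opp (f x)) (fun x => - H x) (fun x => - h x) a b c d Hca Hab Hbd).
  - intros x Hx. apply @continuous_opp. apply Hc; exact Hx.
  - intros x Hx. destruct (Hd x Hx). split. apply @is_derive_opp. auto. unfold_ops_all. lra. }
assert (E : RInt (fun x => opp (f x)) a b = opp (RInt f a b))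
  by exact (@RInt_opp R_CompleteNormedModule f a b Hex).
rewrite E in HH. unfold_ops_all. lra.
Qed.

(** * Square integrability on half-lines *)

Lemma Cnorm2_ge0 z : 0 <= Cnorm2 z.
Proof. unfold Cnorm2. nra. Qed.

Lemma Cnorm2_mul a z : Cnorm2 (Cmul a z) = Cnorm2 a * Cnorm2 z.
Proof. destruct a, z. unfold Cnorm2, Cmul, Cre, Cim; simpl. ring. Qed.

Lemma Cnorm2_add_le z y : Cnorm2 (Cadd z y) <= 2 * Cnorm2 z + 2 * Cnorm2 y.
Proof. destruct z as [a b], y as [c d]. unfold Cnorm2, Cadd, Cre, Cim; simpl.
  pose proof (pow2_ge_0 (a-c)); pose proof (pow2_ge_0 (b-d)). nra. Qed.

Lemma Cnorm2_eq0 z : Cnorm2 z = 0 -> z = (0,0).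
Proof. destruct z as [x y]. unfold Cnorm2, Cre, Cim; simpl. intros. assert (x = 0) by nra.
  assert (y = 0) by nra. subst; reflexivity. Qed.

Definition norm2_continuous (w : R -> Cx) := forall t, 0 < t -> continuous (fun s => Cnorm2 (w s)) t.

Lemma L2_on_Rpos_of_bounds (w : R -> Cx) t0 B M : 0 < t0 -> norm2_continuous w ->
  (forall t, 0 < t <= t0 -> Cnorm2 (w t) <= B) ->
  (forall a b, t0 <= a -> a <= b -> RInt (fun s => Cnorm2 (w s)) a b <= M) ->
  L2_on Rpos w.
Proof.
intros Ht0 Hc HB HM.
set (f := fun s => Cnorm2 (w s)).
assert (Hex : forall a b, 0 < a -> a <= b -> ex_RInt f a b).
{ intros a b Ha Hab. apply (@ex_RInt_continuous R_CompleteNormedModule). intros z Hz. apply Hc.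
  rewrite Rmin_left in Hz; lra. }
exists (Rmax B 0 * t0 + Rmax M 0).
intros a b Ha Hb Hab pr. unfold Rpos in *.
rewrite <- (RInt_Reals _ _ _ pr). fold f.
assert (HBm : B <= Rmax B 0) by apply Rmax_l. assert (0 <= Rmax B 0) by apply Rmax_r.
assert (HMm : M <= Rmax M 0) by apply Rmax_l. assert (0 <= Rmax M 0) by apply Rmax_r.
assert (Hlow : forall a b, 0 < a -> a <= b -> b <= t0 -> RInt f a b <= Rmax B 0 * t0).
{ intros a' b' Ha' Hab' Hbt.
  apply Rle_trans with (RInt (fun _ => Rmax B 0) a' b').
  - apply RInt_le; auto. apply ex_RInt_const. intros x Hx. unfold f. specialize (HB x). lra.
  - rewrite RInt_const. unfold_ops_all. nra. }
destruct (Rle_dec b t0) as [Hb0|Hb0].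
- specialize (Hlow a b Ha Hab Hb0). nra.
- destruct (Rle_dec a t0) as [Ha0|Ha0].
  + rewrite <- (RInt_Chasles f a t0 b) by (apply Hex; lra). unfold_ops_all.
    specialize (Hlow a t0 Ha Ha0 (Rle_refl _)). specialize (HM t0 b (Rle_refl _) ltac:(lra)). fold f in HM.
      lra.
  + specialize (HM a b ltac:(lra) Hab). fold f in HM. nra.
Qed.

Lemma not_L2_on_Rpos_of_primitive (w : R -> Cx) t1 (H h : R -> R) : 0 < t1 -> norm2_continuous w ->
  (forall t, t1 <= t -> is_derive H t (h t) /\ h t <= Cnorm2 (w t)) ->
  (forall M, exists X, t1 <= X /\ M < H X - H t1) ->
  ~ L2_on Rpos w.
Proof.
intros Ht1 Hc Hd Hun [M HM].
destruct (Hun M) as [X [HX1 HX2]].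
assert (pr : Riemann_integrable (fun t => Cnorm2 (w t)) t1 X).
{ apply continuity_implies_RiemannInt; auto. intros x Hx. apply continuity_pt_iff_continuous. apply Hc. lra. }
specialize (HM t1 X Ht1 ltac:(unfold Rpos; lra) HX1 pr).
rewrite <- RInt_Reals in HM.
enough (H X - H t1 <= RInt (fun t => Cnorm2 (w t)) t1 X) by lra.
apply (primitive_diff_le_RInt _ H h t1 X (t1/2) (X+1)); try lra.
- intros x Hx. apply Hc. lra.
- intros x Hx. apply Hd. lra.
Qed.

Lemma is_RInt_reflect (f : R -> R) a b I : is_RInt f a b I -> is_RInt (fun y => f (-y)) (-b) (-a) I.
Proof.
intros H.
assert (H1 : is_RInt f (- - a) (- - b) I) by (rewrite !Ropp_involutive; exact H).
apply (is_RInt_comp_opp f (-a) (-b)) in H1.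
apply is_RInt_opp in H1.
apply is_RInt_swap in H1.
rewrite opp_opp in H1.
eapply is_RInt_ext; [|exact H1]. intros x _. unfold_ops_all. ring.
Qed.

Lemma RiemannInt_reflect (f : R -> R) a b (pr : Riemann_integrable (fun t => f (-t)) a b) :
  exists pr' : Riemann_integrable f (-b) (-a), RiemannInt pr' = RiemannInt pr.
Proof.
assert (H : is_RInt (fun t => f (-t)) a b (RiemannInt pr)).
{ rewrite <- RInt_Reals. apply (@RInt_correct R_CompleteNormedModule). apply ex_RInt_Reals_1. exact pr. }
apply is_RInt_reflect in H.
assert (H2 : is_RInt f (-b) (-a) (RiemannInt pr)).
{ eapply is_RInt_ext; [|exact H]. intros x _. simpl. rewrite Ropp_involutive. reflexivity. }
assert (Hex : ex_RInt f (-b) (-a)) by (eexists; exact H2).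
exists (ex_RInt_Reals_0 _ _ _ Hex).
rewrite <- RInt_Reals. apply is_RInt_unique. exact H2.
Qed.

Lemma L2_on_reflect (w : R -> Cx) : L2_on Rneg w <-> L2_on Rpos (fun t => w (-t)).
Proof.
split; intros [M HM]; exists M; intros a b Ha Hb Hab pr.
- destruct (RiemannInt_reflect (fun t => Cnorm2 (w t)) a b pr) as [pr' E]. rewrite <- E.
  apply HM; unfold Rneg, Rpos in *; lra.
- assert (pr2 : Riemann_integrable (fun t => Cnorm2 (w (- - t))) a b).
  { eapply Riemann_integrable_ext; [|exact pr]. intros x _. rewrite Ropp_involutive. reflexivity. }
  destruct (RiemannInt_reflect (fun t => Cnorm2 (w (- t))) a b pr2) as [pr' E].
  assert (RiemannInt pr = RiemannInt pr2).
  { rewrite <- !RInt_Reals. apply RInt_ext. intros x _. rewrite Ropp_involutive. reflexivity. }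
  rewrite H, <- E. apply HM; unfold Rneg, Rpos in *; lra.
Qed.

Lemma L2_on_Rpos_comb (v w : R -> Cx) al be : norm2_continuous v -> norm2_continuous w ->
  L2_on Rpos v -> L2_on Rpos w -> L2_on Rpos (fun t => Cadd (Cmul al (v t)) (Cmul be (w t))).
Proof.
intros Hcv Hcw [Mv Hv] [Mw Hw].
exists (2 * Cnorm2 al * Mv + 2 * Cnorm2 be * Mw).
intros a b Ha Hb Hab pr. unfold Rpos in *.
set (fv := fun t => Cnorm2 (v t)). set (fw := fun t => Cnorm2 (w t)).
assert (Hexv : ex_RInt fv a b).
{ apply (@ex_RInt_continuous R_CompleteNormedModule). intros z Hz. apply Hcv. rewrite Rmin_left in Hz; lra. }
assert (Hexw : ex_RInt fw a b).
{ apply (@ex_RInt_continuous R_CompleteNormedModule). intros z Hz. apply Hcw. rewrite Rmin_left in Hz; lra. }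
specialize (Hv a b Ha Hb Hab (ex_RInt_Reals_0 _ _ _ Hexv)).
specialize (Hw a b Ha Hb Hab (ex_RInt_Reals_0 _ _ _ Hexw)).
rewrite <- RInt_Reals in Hv, Hw. rewrite <- RInt_Reals. fold fv in Hv. fold fw in Hw.
set (k1 := 2 * Cnorm2 al). set (k2 := 2 * Cnorm2 be).
assert (Hk1 : 0 <= k1) by (unfold k1; pose proof (Cnorm2_ge0 al); lra).
assert (Hk2 : 0 <= k2) by (unfold k2; pose proof (Cnorm2_ge0 be); lra).
assert (Hex2 : ex_RInt (fun x => plus (scal k1 (fv x)) (scal k2 (fw x))) a b).
{ apply @ex_RInt_plus; apply @ex_RInt_scal; assumption. }
apply Rle_trans with (RInt (fun x => plus (scal k1 (fv x)) (scal k2 (fw x))) a b).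
- apply RInt_le; auto. apply ex_RInt_Reals_1; exact pr.
  intros x _. unfold_ops_all. unfold fv, fw, k1, k2.
  pose proof (Cnorm2_add_le (Cmul al (v x)) (Cmul be (w x))).
  rewrite !Cnorm2_mul in H. lra.
- rewrite (@RInt_plus R_CompleteNormedModule) by (apply @ex_RInt_scal; assumption).
  rewrite !(@RInt_scal R_CompleteNormedModule) by assumption. unfold_ops_all. nra.
Qed.

(** * The equation w'' = Q w on (0, oo) *)

Definition Qpot (m : nat) (c1 c2 mu1 mu2 : R) (t : R) : Cx := (c1 * t ^ m + mu1, c2 * t ^ m + mu2).

Definition ode_sol (Q : R -> Cx) (w w1 w2 : R -> Cx) : Prop :=
  forall t, 0 < t -> derivC w w1 t /\ derivC w1 w2 t /\ w2 t = Cmul (Q t) (w t).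

Definition solvesQ Q w := exists w1 w2, ode_sol Q w w1 w2.

Lemma derivC_iff (w w1 : R -> Cx) t :
  derivC w w1 t <-> is_derive (fun s => fst (w s)) t (fst (w1 t))
    /\ is_derive (fun s => snd (w s)) t (snd (w1 t)).
Proof. unfold derivC, Cre, Cim. rewrite !is_derive_Reals. tauto. Qed.

Lemma ode_sol_derive Q w w1 w2 t : ode_sol Q w w1 w2 -> 0 < t ->
  is_derive (fun s => fst (w s)) t (fst (w1 t)) /\ is_derive (fun s => snd (w s)) t (snd (w1 t)) /\
  is_derive (fun s => fst (w1 s)) t (fst (Q t) * fst (w t) - snd (Q t) * snd (w t)) /\
  is_derive (fun s => snd (w1 s)) t (fst (Q t) * snd (w t) + snd (Q t) * fst (w t)).
Proof.
intros H Ht. destruct (H t Ht) as [H1 [H2 H3]].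
apply derivC_iff in H1. apply derivC_iff in H2. rewrite H3 in H2.
unfold Cmul, Cre, Cim in H2; simpl in H2. tauto.
Qed.

Lemma is_derive_sum_sq (u1 u2 : R -> R) d1 d2 t : is_derive u1 t d1 -> is_derive u2 t d2 ->
  is_derive (fun s => u1 s * u1 s + u2 s * u2 s) t (2 * (u1 t * d1 + u2 t * d2)).
Proof. intros H1 H2. auto_derive. repeat split; eexists; eassumption. rewrite_Derive. ring. Qed.

Lemma is_derive_Cnorm2 (w w1 : R -> Cx) t : derivC w w1 t ->
  is_derive (fun s => Cnorm2 (w s)) t (2 * (fst (w t) * fst (w1 t) + snd (w t) * snd (w1 t))).
Proof.
intros H. apply derivC_iff in H. destruct H as [H1 H2]. unfold Cnorm2, Cre, Cim.
exact (is_derive_sum_sq (fun s => fst (w s)) (fun s => snd (w s)) _ _ t H1 H2).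
Qed.

Lemma ode_sol_continuous Q w w1 w2 : ode_sol Q w w1 w2 -> norm2_continuous w.
Proof.
intros H t Ht. apply (@ex_derive_continuous R_AbsRing R_NormedModule). eexists. apply is_derive_Cnorm2.
  apply H; auto.
Qed.

Lemma Rabs_twice_dot_le a b c d : Rabs (2 * (a * b + c * d)) <= a * a + b * b + c * c + d * d.
Proof.
apply Rabs_le. pose proof (pow2_ge_0 (a - b)). pose proof (pow2_ge_0 (a + b)).
pose proof (pow2_ge_0 (c - d)). pose proof (pow2_ge_0 (c + d)). split; nra.
Qed.

Lemma Rabs_mult_le_compat k A E : Rabs A <= E -> Rabs (k * A) <= Rabs k * E.
Proof. intros. rewrite Rabs_mult. apply Rmult_le_compat_l; auto. apply Rabs_pos. Qed.

Definition energy (w w1 : R -> Cx) t := Cnorm2 (w t) + Cnorm2 (w1 t).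

Definition denergy (w w1 w2 : R -> Cx) t := 2 * (fst (w t) * fst (w1 t) + snd (w t) * snd (w1 t)) +
  2 * (fst (w1 t) * fst (w2 t) + snd (w1 t) * snd (w2 t)).

Lemma energy_derive Q w w1 w2 t : ode_sol Q w w1 w2 -> 0 < t ->
  is_derive (energy w w1) t (denergy w w1 w2 t)
    /\ Rabs (denergy w w1 w2 t) <= (1 + Rabs (fst (Q t)) + Rabs (snd (Q t))) * energy w w1 t.
Proof.
intros H Ht. destruct (H t Ht) as [H1 [H2 H3]].
pose proof (is_derive_Cnorm2 _ _ _ H1) as D1. pose proof (is_derive_Cnorm2 _ _ _ H2) as D2.
split. apply (@is_derive_plus R_AbsRing R_NormedModule); [exact D1|exact D2].
unfold denergy. rewrite H3. unfold energy, Cnorm2, Cmul, Cre, Cim. simpl.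
destruct (w t) as [u1 u2]. destruct (w1 t) as [p1 p2]. destruct (Q t) as [q1 q2]. simpl. unfold_ops_all.
set (E := u1 * u1 + u2 * u2 + (p1 * p1 + p2 * p2)).
assert (A0 : Rabs (2 * (u1 * p1 + u2 * p2)) <= E)
  by (pose proof (Rabs_twice_dot_le u1 p1 u2 p2); unfold E; lra).
assert (A1 : Rabs (2 * (p1 * u1 + p2 * u2)) <= E)
  by (pose proof (Rabs_twice_dot_le p1 u1 p2 u2); unfold E; lra).
assert (A2 : Rabs (2 * (p2 * u1 - p1 * u2)) <= E).
{ pose proof (Rabs_twice_dot_le p2 u1 (-p1) u2). replace (p2 * u1 + - p1 * u2) with (p2 * u1 - p1 * u2) in H0
  by ring.
  replace (- p1 * - p1) with (p1 * p1) in H0 by ring. unfold E; lra. }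
pose proof (Rabs_mult_le_compat q1 _ _ A1). pose proof (Rabs_mult_le_compat q2 _ _ A2).
replace (2 * (u1 * p1 + u2 * p2) + 2 * (p1 * (q1 * u1 - q2 * u2) + p2 * (q1 * u2 + q2 * u1)))
  with (2 * (u1 * p1 + u2 * p2) + q1 * (2 * (p1 * u1 + p2 * u2)) + q2 * (2 * (p2 * u1 - p1 * u2))) by ring.
pose proof (Rabs_triang (2 * (u1 * p1 + u2 * p2) + q1 * (2 * (p1 * u1 + p2 * u2)))
  (q2 * (2 * (p2 * u1 - p1 * u2)))).
pose proof (Rabs_triang (2 * (u1 * p1 + u2 * p2)) (q1 * (2 * (p1 * u1 + p2 * u2)))).
fold E. lra.
Qed.

Lemma Qpot_bound m c1 c2 mu1 mu2 t T : 0 < t <= T ->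
  Rabs (fst (Qpot m c1 c2 mu1 mu2 t)) + Rabs (snd (Qpot m c1 c2 mu1 mu2 t))
    <= (Rabs c1 + Rabs c2) * T ^ m + Rabs mu1 + Rabs mu2.
Proof.
intros Ht. unfold Qpot; simpl.
assert (0 <= t ^ m <= T ^ m) by (split; [apply pow_le; lra | apply pow_incr; lra]).
pose proof (Rabs_triang (c1 * t ^ m) mu1). pose proof (Rabs_triang (c2 * t ^ m) mu2).
rewrite !Rabs_mult, !(Rabs_right (t^m)) in * by lra.
assert (Rabs c1 * t ^ m <= Rabs c1 * T ^ m) by (apply Rmult_le_compat_l; [apply Rabs_pos|lra]).
assert (Rabs c2 * t ^ m <= Rabs c2 * T ^ m) by (apply Rmult_le_compat_l; [apply Rabs_pos|lra]).
lra.
Qed.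

Lemma Rabs_le_mult_weaken d K E L : Rabs d <= K * E -> K <= L -> 0 <= E -> d <= L * E /\ - (L * E) <= d.
Proof. intros H1 H2 H3. assert (K * E <= L * E) by (apply Rmult_le_compat_r; auto).
  apply Rabs_le_between in H1. lra. Qed.

Lemma exp_le_compat x y : x <= y -> exp x <= exp y.
Proof. intros H. destruct (Rle_lt_or_eq_dec _ _ H). apply Rlt_le, exp_increasing; auto. subst; lra. Qed.

Lemma energy_ge0 w w1 t : 0 <= energy w w1 t.
Proof. unfold energy. pose proof (Cnorm2_ge0 (w t)). pose proof (Cnorm2_ge0 (w1 t)). lra. Qed.

Lemma energy_Lipschitz m c1 c2 mu1 mu2 w w1 w2 T x : ode_sol (Qpot m c1 c2 mu1 mu2) w w1 w2 -> 0 < x <= T ->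
  let L := 1 + ((Rabs c1 + Rabs c2) * T ^ m + Rabs mu1 + Rabs mu2) in
  is_derive (energy w w1) x (denergy w w1 w2 x) /\ is_derive (fun y => L * y) x L /\
  denergy w w1 w2 x <= L * energy w w1 x /\ - (L * energy w w1 x) <= denergy w w1 w2 x.
Proof.
intros H Hx L. destruct (energy_derive _ _ _ _ x H ltac:(lra)) as [D B].
split; [exact D|split; [apply is_derive_linear|]].
pose proof (Qpot_bound m c1 c2 mu1 mu2 x T Hx). pose proof (energy_ge0 w w1 x).
apply (Rabs_le_mult_weaken _ _ _ L) in B; [exact B|unfold L; lra|auto].
Qed.

Lemma ode_sol_zero_data m c1 c2 mu1 mu2 w w1 w2 x1 : ode_sol (Qpot m c1 c2 mu1 mu2) w w1 w2 -> 0 < x1 ->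
  w x1 = (0,0) -> w1 x1 = (0,0) -> forall t, 0 < t -> w t = (0,0) /\ w1 t = (0,0).
Proof.
intros H Hx1 E0 E1 t Ht.
assert (Ex1 : energy w w1 x1 = 0) by (unfold energy; rewrite E0, E1; unfold Cnorm2, Cre, Cim; simpl; ring).
assert (Et : energy w w1 t <= 0).
{ destruct (Rle_dec x1 t) as [Hle|Hlt].
  - set (L := 1 + ((Rabs c1 + Rabs c2) * t ^ m + Rabs mu1 + Rabs mu2)).
    pose proof (gronwall_forward (energy w w1) (denergy w w1 w2) (fun x => L * x) (fun _ => L) x1 t Hle) as G.
    rewrite Ex1, Rmult_0_l in G. apply G.
    intros x Hx. destruct (energy_Lipschitz m c1 c2 mu1 mu2 w w1 w2 t x H ltac:(lra)) as [D1 [D2 [B1 _]]].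
    split; [exact D1|split; [exact D2|exact B1]].
  - set (L := 1 + ((Rabs c1 + Rabs c2) * x1 ^ m + Rabs mu1 + Rabs mu2)).
    pose proof (gronwall_backward (energy w w1) (denergy w w1 w2) (fun x => L * x) (fun _ => L) t x1
      ltac:(lra))
      as G.
    rewrite Ex1, Rmult_0_l in G. apply G.
    intros x Hx. destruct (energy_Lipschitz m c1 c2 mu1 mu2 w w1 w2 x1 x H ltac:(lra)) as [D1 [D2 [_ B2]]].
    split; [exact D1|split; [exact D2|exact B2]]. }
pose proof (energy_ge0 w w1 t). unfold energy in *.
pose proof (Cnorm2_ge0 (w t)). pose proof (Cnorm2_ge0 (w1 t)).
split; apply Cnorm2_eq0; lra.
Qed.

Lemma ode_sol_bounded_near0 m c1 c2 mu1 mu2 w w1 w2 t0 : ode_sol (Qpot m c1 c2 mu1 mu2) w w1 w2 -> 0 < t0 ->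
  exists B, forall t, 0 < t <= t0 -> Cnorm2 (w t) <= B.
Proof.
intros H Ht0.
set (L := 1 + ((Rabs c1 + Rabs c2) * t0 ^ m + Rabs mu1 + Rabs mu2)).
assert (HL : 0 <= L).
{ unfold L. pose proof (Rabs_pos c1). pose proof (Rabs_pos c2). pose proof (Rabs_pos mu1).
  pose proof (Rabs_pos mu2). pose proof (pow_le t0 m ltac:(lra)).
  pose proof (Rmult_le_pos (Rabs c1 + Rabs c2) (t0 ^ m) ltac:(lra) ltac:(lra)). lra. }
exists (energy w w1 t0 * exp (L * t0)).
intros t Ht.
assert (G : energy w w1 t <= energy w w1 t0 * exp (L * t0 - L * t)).
{ apply (gronwall_backward (energy w w1) (denergy w w1 w2) (fun x => L * x) (fun _ => L) t t0); [lra|].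
  intros x Hx. destruct (energy_Lipschitz m c1 c2 mu1 mu2 w w1 w2 t0 x H ltac:(lra)) as [D1 [D2 [_ B2]]].
  split; [exact D1|split; [exact D2|exact B2]]. }
assert (exp (L * t0 - L * t) <= exp (L * t0)).
{ apply exp_le_compat. assert (0 <= L * t) by (apply Rmult_le_pos; lra). lra. }
pose proof (energy_ge0 w w1 t0). pose proof (Cnorm2_ge0 (w1 t)).
assert (energy w w1 t0 * exp (L * t0 - L * t) <= energy w w1 t0 * exp (L * t0))
  by (apply Rmult_le_compat_l; lra).
unfold energy in *. lra.
Qed.

Definition comb (al be : Cx) (v w : R -> Cx) : R -> Cx := fun t => Cadd (Cmul al (v t)) (Cmul be (w t)).

Lemma is_derive_comb_parts (f1 f2 g1 g2 : R -> R) df1 df2 dg1 dg2 a1 a2 b1 b2 t :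
  is_derive f1 t df1 -> is_derive f2 t df2 -> is_derive g1 t dg1 -> is_derive g2 t dg2 ->
  is_derive (fun s => a1 * f1 s - a2 * f2 s + (b1 * g1 s - b2 * g2 s)) t
    (a1 * df1 - a2 * df2 + (b1 * dg1 - b2 * dg2)) /\
  is_derive (fun s => a1 * f2 s + a2 * f1 s + (b1 * g2 s + b2 * g1 s)) t
    (a1 * df2 + a2 * df1 + (b1 * dg2 + b2 * dg1)).
Proof.
intros H1 H2 H3 H4. split; auto_derive; try (repeat split; eexists; eassumption); rewrite_Derive; ring.
Qed.

Lemma derivC_comb al be (v v1 w w1 : R -> Cx) t : derivC v v1 t -> derivC w w1 t ->
  derivC (comb al be v w) (comb al be v1 w1) t.
Proof.
intros Hv Hw. apply derivC_iff in Hv. apply derivC_iff in Hw. apply derivC_iff.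
destruct Hv as [A B]; destruct Hw as [C D].
destruct (is_derive_comb_parts _ _ _ _ _ _ _ _ (fst al) (snd al) (fst be) (snd be) t A B C D) as [E F].
unfold comb, Cadd, Cmul, Cre, Cim. cbn [fst snd]. split; assumption.
Qed.

Lemma ode_sol_comb Q al be v v1 v2 w w1 w2 : ode_sol Q v v1 v2 -> ode_sol Q w w1 w2 ->
  ode_sol Q (comb al be v w) (comb al be v1 w1) (comb al be v2 w2).
Proof.
intros Hv Hw t Ht. destruct (Hv t Ht) as [A1 [A2 A3]]. destruct (Hw t Ht) as [B1 [B2 B3]].
split; [apply derivC_comb; auto|split; [apply derivC_comb; auto|]].
unfold comb. rewrite A3, B3. destruct al, be, (Q t), (v t), (w t).
unfold Cadd, Cmul, Cre, Cim; cbn [fst snd]. f_equal; ring.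
Qed.

Definition Wr (v v1 w w1 : R -> Cx) t := Cadd (Cmul (v t) (w1 t)) (Copp (Cmul (v1 t) (w t))).

Lemma is_derive_Wr_parts (A B C D E F G H : R -> R) dA dB dC dD dE dF dG dH t :
  is_derive A t dA -> is_derive B t dB -> is_derive C t dC -> is_derive D t dD ->
  is_derive E t dE -> is_derive F t dF -> is_derive G t dG -> is_derive H t dH ->
  is_derive (fun s => A s * B s - C s * D s + - (E s * F s - G s * H s)) t
    (dA * B t + A t * dB - (dC * D t + C t * dD) - (dE * F t + E t * dF - (dG * H t + G t * dH))) /\
  is_derive (fun s => A s * D s + C s * B s + - (E s * H s + G s * F s)) t
    (dA * D t + A t * dD + (dC * B t + C t * dB) - (dE * H t + E t * dH + (dG * F t + G t * dF))).
Proof.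
intros. split; auto_derive; try (repeat split; eexists; eassumption); rewrite_Derive; ring.
Qed.

Lemma eq_of_derive_0 (f : R -> R) a b : a <= b -> (forall x, a <= x <= b -> is_derive f x 0) -> f a = f b.
Proof.
intros Hab H.
assert (f a <= f b) by (apply (le_of_derive_ge0 f (fun _ => 0)); auto; intros; split; [apply H; auto|lra]).
assert (- f a <= - f b).
{ apply (le_of_derive_ge0 (fun x => - f x) (fun _ => 0)); auto. intros x Hx; split; [|lra].
  eapply is_derive_eq. apply @is_derive_opp. apply H; auto. unfold_ops. ring. }
lra.
Qed.

Lemma Wr_derive Q v v1 v2 w w1 w2 t : ode_sol Q v v1 v2 -> ode_sol Q w w1 w2 -> 0 < t ->
  is_derive (fun s => fst (Wr v v1 w w1 s)) t 0 /\ is_derive (fun s => snd (Wr v v1 w w1 s)) t 0.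
Proof.
intros Hv Hw Ht.
destruct (ode_sol_derive _ _ _ _ t Hv Ht) as [A1 [A2 [A3 A4]]].
destruct (ode_sol_derive _ _ _ _ t Hw Ht) as [B1 [B2 [B3 B4]]].
destruct (is_derive_Wr_parts (fun s => fst (v s)) (fun s => fst (w1 s)) (fun s => snd (v s))
  (fun s => snd (w1 s))
  (fun s => fst (v1 s)) (fun s => fst (w s)) (fun s => snd (v1 s)) (fun s => snd (w s)) _ _ _ _ _ _ _ _ t
  A1 B3 A2 B4 A3 B1 A4 B2) as [D1 D2].
unfold Wr, Cadd, Copp, Cmul, Cre, Cim; cbn [fst snd].
split; eapply is_derive_eq; try eassumption; ring_R.
Qed.

Lemma Wr_const Q v v1 v2 w w1 w2 s t : ode_sol Q v v1 v2 -> ode_sol Q w w1 w2 -> 0 < s -> 0 < t ->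
  Wr v v1 w w1 s = Wr v v1 w w1 t.
Proof.
intros Hv Hw Hs Ht.
assert (K : forall a b, 0 < a -> a <= b -> Wr v v1 w w1 a = Wr v v1 w w1 b).
{ intros a b Ha Hab.
  assert (E1 : fst (Wr v v1 w w1 a) = fst (Wr v v1 w w1 b)).
  { apply (eq_of_derive_0 (fun s => fst (Wr v v1 w w1 s)) a b Hab).
    intros x Hx. exact (proj1 (Wr_derive Q v v1 v2 w w1 w2 x Hv Hw ltac:(lra))). }
  assert (E2 : snd (Wr v v1 w w1 a) = snd (Wr v v1 w w1 b)).
  { apply (eq_of_derive_0 (fun s => snd (Wr v v1 w w1 s)) a b Hab).
    intros x Hx. exact (proj2 (Wr_derive Q v v1 v2 w w1 w2 x Hv Hw ltac:(lra))). }
  destruct (Wr v v1 w w1 a), (Wr v v1 w w1 b). cbn in E1, E2. subst. reflexivity. }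
destruct (Rle_dec s t). apply K; auto. symmetry; apply K; lra.
Qed.

(** * The limit-circle case *)

Lemma is_derive_LC_energy (u1 u2 p1 p2 r al : R -> R) du1 du2 dp1 dp2 dr dal t :
  is_derive u1 t du1 -> is_derive u2 t du2 -> is_derive p1 t dp1 -> is_derive p2 t dp2 ->
  is_derive r t dr -> is_derive al t dal -> r t <> 0 ->
  is_derive (fun s => (p1 s * p1 s + p2 s * p2 s) / r s + r s * (u1 s * u1 s + u2 s * u2 s) + al s
    * (u1 s * p1 s + u2 s * p2 s)) t
   ((2 * (p1 t * dp1 + p2 t * dp2)) / r t - (p1 t * p1 t + p2 t * p2 t) * dr / (r t * r t)
    + dr * (u1 t * u1 t + u2 t * u2 t) + r t * (2 * (u1 t * du1 + u2 t * du2))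
    + dal * (u1 t * p1 t + u2 t * p2 t) + al t * (du1 * p1 t + u1 t * dp1 + du2 * p2 t + u2 t * dp2)).
Proof.
intros H1 H2 H3 H4 H5 H6 Hr. auto_derive.
- repeat split; try (eexists; eassumption). exact Hr.
- rewrite_Derive. field. exact Hr.
Qed.

Lemma is_derive_sqrt_pow m t : 0 < t ->
  is_derive (fun s => sqrt (s ^ S m)) t (INR (S m) / 2 * sqrt (t ^ S m) / t).
Proof.
intros Ht. assert (0 < t ^ S m) by (apply pow_lt; lra).
auto_derive. lra.
assert (sqrt (t ^ S m) * sqrt (t ^ S m) = t ^ S m) by (apply sqrt_sqrt; lra).
assert (0 < sqrt (t ^ S m)) by (apply sqrt_lt_R0; lra).
replace (t ^ m) with (t ^ S m / t) by (change (t ^ S m) with (t * t ^ m); field; lra).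
change (match m with 0%nat => 1 | S _ => INR m + 1 end) with (INR (S m)).
set (X := sqrt (t ^ S m)) in *. rewrite <- H0. field. lra.
Qed.

Lemma is_derive_div_mult_id (r : R -> R) dr K t : is_derive r t dr -> t <> 0 -> r t <> 0 ->
  is_derive (fun s => K / (s * r s)) t (- K * (r t + t * dr) / ((t * r t) * (t * r t))).
Proof.
intros H Ht Hr. auto_derive.
- repeat split; try (eexists; eassumption); try apply Rmult_integral_contrapositive; auto.
- rewrite_Derive. field. auto.
Qed.

Lemma is_derive_inv_sqrt C t : 0 < t -> is_derive (fun s => - (4 * C) / sqrt s) t (2 * C / (t * sqrt t)).
Proof.
intros Ht. assert (0 < sqrt t) by (apply sqrt_lt_R0; lra).
auto_derive. split; [lra|split; auto; lra].
assert (sqrt t * sqrt t = t) by (apply sqrt_sqrt; lra).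
rewrite H0. field. lra.
Qed.

Lemma amgm_dot r a b c d : 0 < r -> 2 * Rabs (a * b + c * d) <= (b * b + d * d) / r + r * (a * a + c * c).
Proof.
intros Hr.
assert (r * (2 * Rabs (a * b + c * d)) <= (b * b + d * d) + r * r * (a * a + c * c)).
{ pose proof (Rabs_twice_dot_le (r * a) b (r * c) d).
  replace (2 * (r * a * b + r * c * d)) with (r * (2 * (a * b + c * d))) in H by ring.
  rewrite !Rabs_mult, (Rabs_right r), (Rabs_right 2) in H by lra.
  replace (r * a * (r * a) + b * b + r * c * (r * c) + d * d) with (b * b + d * d + r * r * (a * a + c * c))
    in H by ring.
  lra. }
apply (Rmult_le_reg_l r); auto.
replace (r * ((b * b + d * d) / r + r * (a * a + c * c))) with ((b * b + d * d) + r * r * (a * a + c * c))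
  by (field; lra).
lra.
Qed.

Lemma sqrt_pow_ge k t : (2 <= k)%nat -> 1 <= t -> t * sqrt t <= sqrt (t ^ S k).
Proof.
intros Hk Ht.
assert (t * sqrt t = sqrt (t ^ 3)).
{ replace (t ^ 3) with ((t * t) * t) by ring. rewrite sqrt_mult by nra. rewrite sqrt_square
  by lra. reflexivity. }
rewrite H. apply sqrt_le_1_alt. replace (S k) with (3 + (k - 2))%nat by lia.
rewrite pow_add. assert (1 <= t ^ (k-2)) by (apply pow_R1_Rle; lra).
assert (0 <= t ^ 3) by (apply pow_le; lra). nra.
Qed.

Lemma LC_energy_derive_eq u1 u2 p1 p2 r t K mu1 mu2 : t <> 0 -> r <> 0 ->
  (2 * (p1 * ((-1 * (r * r) + mu1) * u1 - (0 * (r * r) + mu2) * u2) + p2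
    * ((-1 * (r * r) + mu1) * u2 + (0 * (r * r) + mu2) * u1))) / r
  - (p1 * p1 + p2 * p2) * (K * r / t) / (r * r) + (K * r / t) * (u1 * u1 + u2 * u2) + r
    * (2 * (u1 * p1 + u2 * p2))
  + (- K * (r + t * (K * r / t)) / ((t * r) * (t * r))) * (u1 * p1 + u2 * p2)
  + K / (t * r) * (p1 * p1 + u1 * ((-1 * (r * r) + mu1) * u1 - (0 * (r * r) + mu2) * u2) + p2 * p2 + u2
    * ((-1 * (r * r) + mu1) * u2 + (0 * (r * r) + mu2) * u1))
  = 2 * mu1 * (u1 * p1 + u2 * p2) / r - 2 * mu2 * (u2 * p1 - u1 * p2) / r
    + (- K * (r + t * (K * r / t)) / ((t * r) * (t * r))) * (u1 * p1 + u2 * p2) + K / (t * r) * mu1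
      * (u1 * u1 + u2 * u2).
Proof. intros. field. auto. Qed.

Lemma LC_denergy_le r al dal D mu1 mu2 S X Z G : 0 < r -> 0 <= al <= 1/2 -> Rabs dal <= D / r ->
  0 <= S <= G / r -> 2 * Rabs X <= G -> 2 * Rabs Z <= G ->
  2 * mu1 * X / r - 2 * mu2 * Z / r + dal * X + al * mu1 * S <=
  (Rabs mu1 + Rabs mu2 + D / 2 + Rabs mu1 / 2) * G / r.
Proof.
intros Hr0 Hal Hdal [HS0 HSG] HX HZ.
assert (E1 : 2 * mu1 * X / r <= Rabs mu1 * G / r).
{ unfold Rdiv. apply Rmult_le_compat_r. left; apply Rinv_0_lt_compat; lra.
  pose proof (Rle_abs (mu1 * X)). rewrite Rabs_mult in H. pose proof (Rabs_pos mu1). nra. }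
assert (E2 : - (2 * mu2 * Z / r) <= Rabs mu2 * G / r).
{ unfold Rdiv. replace (- (2 * mu2 * Z * / r)) with (2 * (- mu2 * Z) * / r) by ring.
  apply Rmult_le_compat_r. left; apply Rinv_0_lt_compat; lra.
  pose proof (Rle_abs (- mu2 * Z)). rewrite Rabs_mult, Rabs_Ropp in H. pose proof (Rabs_pos mu2). nra. }
assert (E3 : dal * X <= D / r * (G / 2)).
{ pose proof (Rle_abs (dal * X)). rewrite Rabs_mult in H. pose proof (Rabs_pos X). pose proof (Rabs_pos dal).
  assert (Rabs dal * Rabs X <= D / r * Rabs X) by (apply Rmult_le_compat_r; auto).
  assert (0 <= D / r) by lra. nra. }
assert (E4 : al * mu1 * S <= Rabs mu1 / 2 * (G / r)).
{ pose proof (Rle_abs mu1). pose proof (Rabs_pos mu1).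
  assert (al * mu1 <= Rabs mu1 / 2).
  { destruct (Rle_dec 0 mu1). rewrite Rabs_right by lra. nra. rewrite Rabs_left by lra. nra. }
  assert (al * mu1 * S <= Rabs mu1 / 2 * S) by (apply Rmult_le_compat_r; auto).
  assert (Rabs mu1 / 2 * S <= Rabs mu1 / 2 * (G / r)) by (apply Rmult_le_compat_l; lra).
  lra. }
replace ((Rabs mu1 + Rabs mu2 + D / 2 + Rabs mu1 / 2) * G / r)
  with (Rabs mu1 * G / r + Rabs mu2 * G / r + D / r * (G / 2) + Rabs mu1 / 2 * (G / r)) by (field; lra).
lra.
Qed.

Lemma LC_energy_bounds r al dal D mu1 mu2 u1 u2 p1 p2 : 1 <= r -> 0 <= al <= 1/2 -> Rabs dal <= D / r ->
  let S := u1 * u1 + u2 * u2 in let T := p1 * p1 + p2 * p2 in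
  let X := u1 * p1 + u2 * p2 in let Z := u2 * p1 - u1 * p2 in
  let F := T / r + r * S + al * X in
  let dF := 2 * mu1 * X / r - 2 * mu2 * Z / r + dal * X + al * mu1 * S in
  0 <= F /\ S <= 2 * F / r /\ dF <= 2 * (Rabs mu1 + Rabs mu2 + D / 2 + Rabs mu1 / 2) / r * F.
Proof.
intros Hr Hal Hdal S T X Z F dF.
assert (Hr0 : 0 < r) by lra.
set (G := T / r + r * S).
assert (HX : 2 * Rabs X <= G) by (apply amgm_dot; auto).
assert (HZ : 2 * Rabs Z <= G).
{ unfold Z, G, T, S. pose proof (amgm_dot r u2 p1 (- u1) p2 Hr0).
  replace (u2 * p1 + - u1 * p2) with (u2 * p1 - u1 * p2) in H by ring.
  replace (u2 * u2 + - u1 * - u1) with (u1 * u1 + u2 * u2) in H by ring. lra. }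
assert (HS0 : 0 <= S) by (unfold S; nra). assert (HT0 : 0 <= T) by (unfold T; nra).
assert (HTr : 0 <= T / r) by (apply Rdiv_le_0_compat; lra).
assert (HG0 : 0 <= G) by (unfold G; nra).
assert (HSG : S <= G / r).
{ unfold G. apply (Rmult_le_reg_l r); auto. replace (r * ((T / r + r * S) / r)) with (T / r + r * S)
  by (field; lra).
  nra. }
assert (HaX : Rabs (al * X) <= G / 4).
{ rewrite Rabs_mult, (Rabs_right al) by lra. pose proof (Rabs_pos X). nra. }
assert (HF : G / 2 <= F).
{ unfold F. fold G. pose proof (Rle_abs (- (al * X))). rewrite Rabs_Ropp in H. lra. }
split; [lra|split].
- apply Rle_trans with (G / r); auto. apply Rmult_le_compat_r; [left; apply Rinv_0_lt_compat; lra| lra].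
- set (C0 := Rabs mu1 + Rabs mu2 + D / 2 + Rabs mu1 / 2).
  assert (HdF : dF <= C0 * G / r) by (apply LC_denergy_le; auto).
  assert (HC0 : 0 <= C0).
  { unfold C0. pose proof (Rabs_pos mu1). pose proof (Rabs_pos mu2). pose proof (Rabs_pos dal).
    assert (0 <= D / r) by lra.
      assert (0 <= D) by (apply (Rmult_le_reg_r (/ r)); [apply Rinv_0_lt_compat; lra|]; unfold Rdiv
      in *; lra). lra. }
  apply Rle_trans with (C0 * G / r); auto.
  unfold Rdiv. replace (2 * C0 * / r * F) with (C0 * (2 * F) * / r) by ring.
  apply Rmult_le_compat_r. left; apply Rinv_0_lt_compat; lra. apply Rmult_le_compat_l; lra.
Qed.

Section LimitCircle.
Variables (k : nat) (mu1 mu2 : R) (w w1 w2 : R -> Cx).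
Hypothesis Hk : (2 <= k)%nat.
Hypothesis Hs : ode_sol (Qpot (S k) (-1) 0 mu1 mu2) w w1 w2.

Let K := INR (S k) / 2.
Let t0 := INR (S k).
Let r (t : R) : R := sqrt (t ^ S k).
Let al (t : R) : R := K / (t * r t).
Let dal (t : R) : R := - K * (r t + t * (K * r t / t)) / ((t * r t) * (t * r t)).
Let D := K * (1 + K).
Let C0 := Rabs mu1 + Rabs mu2 + D / 2 + Rabs mu1 / 2.

(* A Liouville-type energy for w'' = (mu - t^(k+1)) w, with r = t^((k+1)/2); the
   correction al * Re(conj w w') absorbs the terms of F' proportional to r'/r, so
   that F' <= O(t^(-3/2)) F. *)
Let F (t : R) : R := (fst (w1 t) * fst (w1 t) + snd (w1 t) * snd (w1 t)) / r t
   + r t * (fst (w t) * fst (w t) + snd (w t) * snd (w t))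
   + al t * (fst (w t) * fst (w1 t) + snd (w t) * snd (w1 t)).
Let dF (t : R) : R := 2 * mu1 * (fst (w t) * fst (w1 t) + snd (w t) * snd (w1 t)) / r t
   - 2 * mu2 * (snd (w t) * fst (w1 t) - fst (w t) * snd (w1 t)) / r t
   + dal t * (fst (w t) * fst (w1 t) + snd (w t) * snd (w1 t))
   + al t * mu1 * (fst (w t) * fst (w t) + snd (w t) * snd (w t)).

Lemma LC_t0_ge3 : 3 <= t0.
Proof. unfold t0. replace 3 with (INR 3) by (simpl; ring). apply le_INR. lia. Qed.

Lemma LC_K_pos : 0 < K.
Proof. unfold K. pose proof (lt_0_INR (S k) ltac:(lia)). lra. Qed.

Lemma LC_C0_ge0 : 0 <= C0.
Proof.
pose proof LC_K_pos. unfold C0, D.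
pose proof (Rabs_pos mu1). pose proof (Rabs_pos mu2). nra.
Qed.

Lemma LC_r_bounds t : 1 <= t -> 1 <= t * sqrt t <= r t.
Proof.
intros Ht. split.
- assert (1 <= sqrt t) by (rewrite <- sqrt_1; apply sqrt_le_1_alt; lra). nra.
- apply sqrt_pow_ge; auto.
Qed.

Lemma LC_energy_derive t : 0 < t -> is_derive F t (dF t).
Proof.
intros Ht. destruct (ode_sol_derive _ _ _ _ t Hs Ht) as [A1 [A2 [A3 A4]]].
assert (Hrt : 0 < r t) by (apply sqrt_lt_R0; apply pow_lt; lra).
pose proof (is_derive_sqrt_pow k t Ht) as Dr. fold (r t) in Dr.
pose proof (is_derive_div_mult_id r _ K t Dr ltac:(lra) ltac:(lra)) as Da.
eapply is_derive_eq.
- apply (is_derive_LC_energy (fun s => fst (w s)) (fun s => snd (w s))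
    (fun s => fst (w1 s)) (fun s => snd (w1 s)) r al); eauto. lra.
- unfold dF, dal, al. unfold Qpot; cbn [fst snd].
  assert (E : t ^ S k = r t * r t) by (unfold r; rewrite sqrt_sqrt; auto; apply pow_le; lra).
  change (sqrt (t ^ S k)) with (r t). rewrite E. fold K.
  replace (INR (S k) / 2 * r t / t) with (K * r t / t) by (unfold K; field; lra).
  apply LC_energy_derive_eq; lra.
Qed.

Lemma LC_energy_estimates t : t0 <= t ->
  0 <= F t /\ fst (w t) * fst (w t) + snd (w t) * snd (w t) <= 2 * F t / r t /\
  dF t <= 2 * C0 / (t * sqrt t) * F t.
Proof.
intros Ht. pose proof LC_t0_ge3. pose proof LC_K_pos. pose proof LC_C0_ge0.
destruct (LC_r_bounds t ltac:(lra)) as [Hr1 Hr2].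
assert (Hrt : 1 <= r t) by lra.
assert (Hal : 0 <= al t <= 1/2).
{ unfold al. split. apply Rdiv_le_0_compat; nra.
  apply (Rmult_le_reg_l (t * r t)). nra. field_simplify; try nra. unfold t0, K in *. nra. }
assert (Hdal : Rabs (dal t) <= D / r t).
{ unfold dal.
  replace (- K * (r t + t * (K * r t / t)) / (t * r t * (t * r t))) with (- (D / r t / (t * t)))
    by (unfold D; field; nra).
  rewrite Rabs_Ropp. rewrite Rabs_right.
  - unfold Rdiv at 1. rewrite <- (Rmult_1_r (D / r t)) at 2. unfold Rdiv.
    assert (0 <= D * / r t) by (unfold D; apply Rmult_le_pos; [nra|left; apply Rinv_0_lt_compat; lra]).
    apply Rmult_le_compat_l; auto. rewrite <- Rinv_1. apply Rinv_le_contravar; nra.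
  - apply Rle_ge. unfold D. apply Rdiv_le_0_compat; [apply Rdiv_le_0_compat; nra|nra]. }
destruct (LC_energy_bounds (r t) (al t) (dal t) D mu1 mu2 (fst (w t)) (snd (w t))
  (fst (w1 t)) (snd (w1 t)) Hrt Hal Hdal) as [B1 [B2 B3]].
fold C0 in B3. split; [exact B1|split; [exact B2|]].
apply Rle_trans with (2 * C0 / r t * F t); [exact B3|].
apply Rmult_le_compat_r; [exact B1|]. unfold Rdiv. apply Rmult_le_compat_l; [lra|].
apply Rinv_le_contravar; lra.
Qed.

Lemma LC_energy_bounded : exists B, 0 <= B /\ forall t, t0 <= t -> F t <= B.
Proof.
pose proof LC_t0_ge3. pose proof LC_C0_ge0.
set (Hprim := fun t => - (4 * C0) / sqrt t).
exists (F t0 * exp (- Hprim t0)). split.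
{ destruct (LC_energy_estimates t0 (Rle_refl _)). pose proof (exp_pos (- Hprim t0)). nra. }
intros t Ht.
assert (G : F t <= F t0 * exp (Hprim t - Hprim t0)).
{ apply (gronwall_forward F dF Hprim (fun t => 2 * C0 / (t * sqrt t))); auto.
  intros x Hx. split; [apply LC_energy_derive; lra|split].
  apply is_derive_inv_sqrt; lra. apply LC_energy_estimates; lra. }
assert (Hprim t <= 0).
{ unfold Hprim. assert (0 < sqrt t) by (apply sqrt_lt_R0; lra).
  unfold Rdiv. assert (0 < / sqrt t) by (apply Rinv_0_lt_compat; lra). nra. }
assert (exp (Hprim t - Hprim t0) <= exp (- Hprim t0)) by (apply exp_le_compat; lra).
destruct (LC_energy_estimates t0 (Rle_refl _)) as [F0 _].
apply Rle_trans with (1 := G). apply Rmult_le_compat_l; auto.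
Qed.

Lemma LC_norm2_decay : exists B, 0 <= B /\ forall t, t0 <= t -> Cnorm2 (w t) <= 2 * B / (t * sqrt t).
Proof.
pose proof LC_t0_ge3.
destruct LC_energy_bounded as [B [HB0 HB]]. exists B. split; auto.
intros t Ht. destruct (LC_energy_estimates t Ht) as [_ [B2 _]].
destruct (LC_r_bounds t ltac:(lra)) as [Hr1 Hr2].
unfold Cnorm2, Cre, Cim. apply Rle_trans with (1 := B2).
unfold Rdiv. apply Rle_trans with (2 * B * / r t).
- apply Rmult_le_compat_r. left; apply Rinv_0_lt_compat; lra. pose proof (HB t Ht). lra.
- apply Rmult_le_compat_l. lra. apply Rinv_le_contravar; lra.
Qed.

Lemma LC_L2 : L2_on Rpos w.
Proof.
pose proof LC_t0_ge3.
destruct LC_norm2_decay as [B [HB0 HS]].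
destruct (ode_sol_bounded_near0 _ _ _ _ _ _ _ _ t0 Hs ltac:(lra)) as [Bl HBl].
apply (L2_on_Rpos_of_bounds w t0 Bl (4 * B)); auto; try lra.
- exact (ode_sol_continuous _ _ _ _ Hs).
- intros a b Ha Hab.
  apply Rle_trans with ((fun t => - (4 * B) / sqrt t) b - (fun t => - (4 * B) / sqrt t) a).
  + apply (RInt_le_primitive_diff (fun s => Cnorm2 (w s)) (fun t => - (4 * B) / sqrt t)
      (fun t => 2 * B / (t * sqrt t)) a b (a / 2) (b + 1)); try lra.
    * intros x Hx. apply (ode_sol_continuous _ _ _ _ Hs). lra.
    * intros x Hx. split. apply is_derive_inv_sqrt. lra. apply HS. lra.
  + cbv beta. assert (1 <= sqrt a) by (rewrite <- sqrt_1; apply sqrt_le_1_alt; lra).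
    assert (0 < sqrt b) by (apply sqrt_lt_R0; lra).
    assert (0 <= 4 * B / sqrt b) by (apply Rdiv_le_0_compat; lra).
    assert (4 * B / sqrt a <= 4 * B).
    { unfold Rdiv. rewrite <- (Rmult_1_r (4 * B)) at 2. apply Rmult_le_compat_l. lra.
      rewrite <- Rinv_1. apply Rinv_le_contravar; lra. }
    unfold Rdiv in *. lra.
Qed.
End LimitCircle.

(** * The limit-point case *)

Lemma pick_adh (x : nat -> R) l : ValAdh x l -> forall (N k : nat),
    {p : nat | (N <= p)%nat /\ Rabs (x p - l) < / (INR k + 1)}.
Proof.
intros H N k. apply constructive_indefinite_description.
assert (Hk : 0 < / (INR k + 1)) by (apply Rinv_0_lt_compat; pose proof (pos_INR k); lra).
destruct (H (disc l (mkposreal _ Hk)) N) as [p [Hp1 Hp2]].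
- exists (mkposreal _ Hk). intros y Hy. exact Hy.
- exists p. split; auto.
Qed.

Lemma bounded_seq_cv_subseq (x : nat -> R) : (forall n, -1 <= x n <= 1) ->
  exists phi : nat -> nat, (forall n, (phi n < phi (S n))%nat) /\ exists l, Un_cv (fun n => x (phi n)) l.
Proof.
intros Hb.
destruct (Bolzano_Weierstrass x (fun c => -1 <= c <= 1) (compact_P3 (-1) 1) Hb) as [l Hl].
set (pk := pick_adh x l Hl).
set (phi := fix phi (n : nat) : nat := match n
  with O => proj1_sig (pk O O) | S n' => proj1_sig (pk (S (phi n')) n) end).
exists phi. split.
- intros n. change (phi (S n)) with (proj1_sig (pk (S (phi n)) (S n))).
  destruct (proj2_sig (pk (S (phi n)) (S n))) as [Hp _]. lia.
- exists l. intros eps Heps.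
  destruct (archimed (/ eps)) as [Ha _].
  assert (Hz : (0 <= up (/ eps))%Z).
  { apply le_IZR. pose proof (Rinv_0_lt_compat eps Heps). lra. }
  exists (Z.to_nat (up (/ eps))). intros n Hn. unfold Rdist.
  assert (Hphi : Rabs (x (phi n) - l) < / (INR n + 1)).
  { destruct n. exact (proj2 (proj2_sig (pk 0%nat 0%nat))).
    change (phi (S n)) with (proj1_sig (pk (S (phi n)) (S n))).
      exact (proj2 (proj2_sig (pk (S (phi n)) (S n)))). }
  apply Rlt_le_trans with (1 := Hphi).
  assert (INR (Z.to_nat (up (/ eps))) <= INR n) by (apply le_INR; lia).
  rewrite INR_IZR_INZ, Z2Nat.id in H by auto.
  assert (/ eps < INR n + 1) by lra.
  apply Rle_trans with (/ / eps). apply Rinv_le_contravar. apply Rinv_0_lt_compat; lra. lra.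
  rewrite Rinv_inv. lra.
Qed.

Lemma strict_incr_ge_id (phi : nat -> nat) : (forall n, (phi n < phi (S n))%nat)
    -> forall n, (n <= phi n)%nat.
Proof. intros H n. induction n. lia. specialize (H n). lia. Qed.

Lemma strict_incr_le (phi : nat -> nat) : (forall n, (phi n < phi (S n))%nat) -> forall n m, (n <= m)%nat
    -> (phi n <= phi m)%nat.
Proof. intros H n m Hnm. induction Hnm. lia. specialize (H m). lia. Qed.

Lemma Un_cv_subseq (x : nat -> R) l (psi : nat -> nat) : (forall n, (psi n < psi (S n))%nat) ->
  Un_cv x l -> Un_cv (fun n => x (psi n)) l.
Proof.
intros Hp H eps Heps. destruct (H eps Heps) as [N HN]. exists N. intros n Hn.
apply HN. pose proof (strict_incr_ge_id psi Hp n). lia.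
Qed.

Lemma bounded_seq4_cv_subseq (a b c d : nat -> R) :
  (forall n, -1 <= a n <= 1) -> (forall n, -1 <= b n <= 1) -> (forall n, -1 <= c n <= 1)
    -> (forall n, -1 <= d n <= 1) ->
  exists phi : nat -> nat, (forall n, (phi n < phi (S n))%nat) /\
   exists la lb lc ld, Un_cv (fun n => a (phi n)) la /\ Un_cv (fun n => b (phi n)) lb /\
                       Un_cv (fun n => c (phi n)) lc /\ Un_cv (fun n => d (phi n)) ld.
Proof.
intros Ha Hb Hc Hd.
destruct (bounded_seq_cv_subseq a Ha) as [p1 [Hp1 [la La]]].
destruct (bounded_seq_cv_subseq (fun n => b (p1 n)) (fun n => Hb _)) as [p2 [Hp2 [lb Lb]]].
destruct (bounded_seq_cv_subseq (fun n => c (p1 (p2 n))) (fun n => Hc _)) as [p3 [Hp3 [lc Lc]]].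
destruct (bounded_seq_cv_subseq (fun n => d (p1 (p2 (p3 n)))) (fun n => Hd _)) as [p4 [Hp4 [ld Ld]]].
assert (Inc : forall (f g : nat -> nat), (forall n, (f n < f (S n))%nat) -> (forall n, (g n < g (S n))%nat) ->
   forall n, (f (g n) < f (g (S n)))%nat).
{ intros f g Hf Hg n. assert (HH := strict_incr_le f Hf (S (g n)) (g (S n)) (Hg n)). specialize (Hf (g n)).
  lia. }
pose proof (Inc p3 p4 Hp3 Hp4) as I1.
pose proof (Inc p2 (fun n => p3 (p4 n)) Hp2 I1) as I2.
pose proof (Inc p1 (fun n => p2 (p3 (p4 n))) Hp1 I2) as I3.
exists (fun n => p1 (p2 (p3 (p4 n)))). split; [exact I3|].
exists la, lb, lc, ld. split; [|split; [|split]].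
- exact (Un_cv_subseq (fun n => a (p1 n)) la (fun n => p2 (p3 (p4 n))) I2 La).
- exact (Un_cv_subseq (fun n => b (p1 (p2 n))) lb (fun n => p3 (p4 n)) I1 Lb).
- exact (Un_cv_subseq (fun n => c (p1 (p2 (p3 n)))) lc p4 Hp4 Lc).
- exact Ld.
Qed.

Lemma Un_cv_le0 (x : nat -> R) l N : Un_cv x l -> (forall n, (N <= n)%nat -> x n <= 0) -> l <= 0.
Proof.
intros H Hx. destruct (Rle_dec l 0) as [|Hl]; auto. exfalso.
destruct (H (l / 2) ltac:(lra)) as [M HM].
specialize (HM (max N M) ltac:(lia)). specialize (Hx (max N M) ltac:(lia)).
unfold Rdist in HM. apply Rabs_def2 in HM. lra.
Qed.

(* Fz = Re(z conj(w) w') with z = z1 + i z2, whose derivative is z1 |w'|^2 + Re(z Q) |w|^2. *)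
Definition Fz z1 z2 (w w1 : R -> Cx) t :=
  z1 * (fst (w t) * fst (w1 t) + snd (w t) * snd (w1 t))
  - z2 * (fst (w t) * snd (w1 t) - snd (w t) * fst (w1 t)).

Definition dFz z1 z2 (Q w w1 : R -> Cx) t :=
  z1 * (fst (w1 t) * fst (w1 t) + snd (w1 t) * snd (w1 t)) +
  (z1 * fst (Q t) - z2 * snd (Q t)) * (fst (w t) * fst (w t) + snd (w t) * snd (w t)).

Lemma is_derive_Fz_parts (u1 u2 p1 p2 : R -> R) du1 du2 dp1 dp2 z1 z2 t :
  is_derive u1 t du1 -> is_derive u2 t du2 -> is_derive p1 t dp1 -> is_derive p2 t dp2 ->
  is_derive (fun s => z1 * (u1 s * p1 s + u2 s * p2 s) - z2 * (u1 s * p2 s - u2 s * p1 s)) t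
   (z1 * (du1 * p1 t + u1 t * dp1 + (du2 * p2 t + u2 t * dp2))
    - z2 * (du1 * p2 t + u1 t * dp2 - (du2 * p1 t + u2 t * dp1))).
Proof. intros. auto_derive; try (repeat split; eexists; eassumption). rewrite_Derive. ring. Qed.

Lemma is_derive_Fz Q w w1 w2 z1 z2 t : ode_sol Q w w1 w2 -> 0 < t
    -> is_derive (Fz z1 z2 w w1) t (dFz z1 z2 Q w w1 t).
Proof.
intros H Ht. destruct (ode_sol_derive _ _ _ _ t H Ht) as [A1 [A2 [A3 A4]]].
eapply is_derive_eq. apply (is_derive_Fz_parts _ _ _ _ _ _ _ _ z1 z2 t A1 A2 A3 A4).
unfold dFz. ring_R.
Qed.

Definition Cinv (z : Cx) : Cx := (fst z / Cnorm2 z, - snd z / Cnorm2 z).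

Lemma Cnorm2_neq0 z : z <> (0,0) -> Cnorm2 z <> 0.
Proof. intros H E. apply H. apply Cnorm2_eq0; auto. Qed.

Lemma lin2_solve (V V1 Wv W1 D0 D1 : Cx) :
  Cadd (Cmul V W1) (Copp (Cmul V1 Wv)) <> (0,0) ->
  let Dt := Cadd (Cmul V W1) (Copp (Cmul V1 Wv)) in
  let al := Cmul (Cadd (Cmul D0 W1) (Copp (Cmul D1 Wv))) (Cinv Dt) in
  let be := Cmul (Cadd (Cmul D1 V) (Copp (Cmul D0 V1))) (Cinv Dt) in
  Cadd (Cmul al V) (Cmul be Wv) = D0 /\ Cadd (Cmul al V1) (Cmul be W1) = D1.
Proof.
intros HD Dt al be. pose proof (Cnorm2_neq0 _ HD) as HN. fold Dt in HN.
unfold al, be, Cinv. set (n := Cnorm2 Dt) in *.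
assert (Hn : n = Cnorm2 Dt) by reflexivity. clearbody n. unfold Dt in Hn.
destruct V as [v1 v2], V1 as [p1 p2], Wv as [w1 w2], W1 as [q1 q2], D0 as [d1 d2], D1 as [e1 e2].
unfold Dt, Cadd, Copp, Cmul, Cnorm2, Cre, Cim in *. cbn [fst snd] in *.
split; f_equal; field_simplify; auto; rewrite Hn; field; auto; rewrite <- Hn; auto.
Qed.

Lemma lin2_solvable (V V1 Wv W1 D0 D1 : Cx) :
  Cadd (Cmul V W1) (Copp (Cmul V1 Wv)) <> (0,0) ->
  exists al be, Cadd (Cmul al V) (Cmul be Wv) = D0 /\ Cadd (Cmul al V1) (Cmul be W1) = D1.
Proof. intros H. destruct (lin2_solve V V1 Wv W1 D0 D1 H) as [A B].
  eexists; eexists; split; [exact A|exact B]. Qed.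

Lemma Wr0_proportional (V V1 Wv W1 : Cx) : Wv <> (0,0) ->
  Cadd (Cmul V W1) (Copp (Cmul V1 Wv)) = (0,0) ->
  Cadd (Cmul (1,0) V) (Cmul (Copp (Cmul V (Cinv Wv))) Wv) = (0,0) /\
  Cadd (Cmul (1,0) V1) (Cmul (Copp (Cmul V (Cinv Wv))) W1) = (0,0).
Proof.
intros HW HD. pose proof (Cnorm2_neq0 _ HW) as HN.
set (n := Cnorm2 Wv) in *. assert (Hn : n = Cnorm2 Wv) by reflexivity. clearbody n.
destruct V as [v1 v2], V1 as [p1 p2], Wv as [w1 w2], W1 as [q1 q2].
unfold Cinv, Cadd, Copp, Cmul, Cnorm2, Cre, Cim in *. cbn [fst snd] in *.
injection HD as HD1 HD2.
rewrite Hn in HN. clear Hn n.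
split; f_equal.
- field; auto.
- field; auto.
- transitivity (- ((v1 * q1 - v2 * q2 + - (p1 * w1 - p2 * w2)) * w1
  + (v1 * q2 + v2 * q1 + - (p1 * w2 + p2 * w1)) * w2) / (w1 * w1 + w2 * w2)).
  field; auto. rewrite HD1, HD2. field; auto.
- transitivity (- ((v1 * q2 + v2 * q1 + - (p1 * w2 + p2 * w1)) * w1
  - (v1 * q1 - v2 * q2 + - (p1 * w1 - p2 * w2)) * w2) / (w1 * w1 + w2 * w2)).
  field; auto. rewrite HD1, HD2. field; auto.
Qed.

Lemma Un_cv_const (c : R) : Un_cv (fun _ => c) c.
Proof. intros eps He. exists O. intros. unfold Rdist. rewrite Rminus_diag, Rabs_R0. lra. Qed.

Ltac solve_Un_cv :=
  repeat first [assumption | apply Un_cv_const | apply CV_minus | apply CV_plus | apply CV_mult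
               | apply CV_opp].

Lemma Un_cv_Fz_comb z1 z2 (y1 y2 y1p y2p : R -> Cx) (a1 a2 b1 b2 : nat -> R) la lb lc ld t :
  Un_cv a1 la -> Un_cv a2 lb -> Un_cv b1 lc -> Un_cv b2 ld ->
  Un_cv (fun k => Fz z1 z2 (comb (a1 k, a2 k) (b1 k, b2 k) y1 y2) (comb (a1 k, a2 k) (b1 k, b2 k) y1p y2p) t)
        (Fz z1 z2 (comb (la, lb) (lc, ld) y1 y2) (comb (la, lb) (lc, ld) y1p y2p) t).
Proof.
intros A1 A2 B1 B2. unfold Fz, comb, Cadd, Cmul, Cre, Cim. cbn [fst snd]. solve_Un_cv.
Qed.

Lemma comb_Wr1_zero (Y1 P1 Y2 P2 a b : Cx) :
  Cadd (Cmul Y1 P2) (Copp (Cmul P1 Y2)) = (1,0) -> Cadd (Cmul a Y1) (Cmul b Y2) = (0,0) ->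
  Cadd (Cmul a P1) (Cmul b P2) = (0,0) -> a = (0,0) /\ b = (0,0).
Proof.
intros W E F.
assert (Ha : Cmul a (Cadd (Cmul Y1 P2) (Copp (Cmul P1 Y2))) =
  Cadd (Cmul P2 (Cadd (Cmul a Y1) (Cmul b Y2))) (Copp (Cmul Y2 (Cadd (Cmul a P1) (Cmul b P2))))).
{ destruct Y1, P1, Y2, P2, a, b. unfold Cadd, Cmul, Copp, Cre, Cim; cbn [fst snd]. f_equal; ring. }
assert (Hb : Cmul b (Cadd (Cmul Y1 P2) (Copp (Cmul P1 Y2))) =
  Cadd (Cmul Y1 (Cadd (Cmul a P1) (Cmul b P2))) (Copp (Cmul P1 (Cadd (Cmul a Y1) (Cmul b Y2))))).
{ destruct Y1, P1, Y2, P2, a, b. unfold Cadd, Cmul, Copp, Cre, Cim; cbn [fst snd]. f_equal; ring. }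
rewrite W, E, F in Ha, Hb. destruct a, b, Y1, Y2, P1, P2.
unfold Cadd, Cmul, Copp, Cre, Cim in Ha, Hb; cbn [fst snd] in Ha, Hb.
injection Ha as Ha1 Ha2. injection Hb as Hb1 Hb2. split; f_equal; lra.
Qed.

Lemma nat_above (x : R) : exists N : nat, x <= INR N.
Proof.
destruct (archimed x) as [H _]. destruct (Z_le_gt_dec 0 (up x)).
- exists (Z.to_nat (up x)). rewrite INR_IZR_INZ, Z2Nat.id by auto. lra.
- exists O. simpl. apply Z.gt_lt in g. apply IZR_lt in g. lra.
Qed.

Lemma Fz_at_data z1 z2 (u u1 : R -> Cx) t0 : u t0 = (1,0) -> u1 t0 = (z1, -z2)
    -> Fz z1 z2 u u1 t0 = z1 * z1 + z2 * z2.
Proof. intros E1 E2. unfold Fz. rewrite E1, E2. cbn [fst snd]. ring. Qed.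

Lemma comb_opp_zero c (v w : Cx) : Cadd (Cmul (1,0) v) (Cmul (Copp c) w) = (0,0) -> v = Cmul c w.
Proof.
destruct c as [a b], v as [x y], w as [p q]. unfold Cadd, Cmul, Copp, Cre, Cim; cbn [fst snd].
intros E. injection E as E1 E2. f_equal; lra.
Qed.

Definition Cscal (s : R) (z : Cx) : Cx := (s * fst z, s * snd z).

Definition normalize2 (a b : Cx) : Cx * Cx :=
  let n := sqrt (Cnorm2 a + Cnorm2 b) in (Cscal (/ n) a, Cscal (/ n) b).

Lemma normalize2_norm a b : 0 < Cnorm2 a + Cnorm2 b ->
  Cnorm2 (fst (normalize2 a b)) + Cnorm2 (snd (normalize2 a b)) = 1.
Proof.
intros H. destruct a as [a1 a2], b as [b1 b2].
unfold normalize2, Cscal, Cnorm2, Cre, Cim in *; cbn [fst snd] in *.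
remember (a1 * a1 + a2 * a2 + (b1 * b1 + b2 * b2)) as S eqn:ES.
assert (HSS : sqrt S * sqrt S = S) by (apply sqrt_sqrt; lra).
assert (Hn : 0 < sqrt S) by (apply sqrt_lt_R0; lra).
transitivity ((a1 * a1 + a2 * a2 + (b1 * b1 + b2 * b2)) / (sqrt S * sqrt S)); [field; lra|].
rewrite <- ES, HSS. field. lra.
Qed.

Lemma norm1_coord_bounds (a b : Cx) : Cnorm2 a + Cnorm2 b = 1 ->
  (-1 <= fst a <= 1) /\ (-1 <= snd a <= 1) /\ (-1 <= fst b <= 1) /\ (-1 <= snd b <= 1).
Proof.
destruct a as [x1 x2], b as [x3 x4]. unfold Cnorm2, Cre, Cim; cbn [fst snd]. intros H.
assert (0 <= x1 * x1) by nra. assert (0 <= x2 * x2) by nra.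
assert (0 <= x3 * x3) by nra. assert (0 <= x4 * x4) by nra.
repeat split; nra.
Qed.

Lemma comb_Cscal c a b (v w : R -> Cx) t :
  comb (Cscal c a) (Cscal c b) v w t = Cscal c (comb a b v w t).
Proof.
unfold comb, Cscal, Cadd, Cmul, Cre, Cim; cbn [fst snd]. f_equal; ring.
Qed.

Lemma is_derive_lin_plus_inv (F : R -> R) dF k t : is_derive F t dF -> F t <> 0 ->
  is_derive (fun s => k * (2 * s + 1 / F s)) t (k * (2 - dF / (F t * F t))).
Proof. intros H HF. auto_derive. split; [eexists; eassumption|split; auto]. rewrite_Derive. field. auto. Qed.

Lemma lin_plus_inv_unbounded (F : R -> R) k t1 : 0 < k -> (forall t, t1 <= t -> 0 < F t) ->
  forall M, exists X, t1 <= X /\ M < k * (2 * X + 1 / F X) - k * (2 * t1 + 1 / F t1).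
Proof.
intros Hk HFp M. set (X := t1 + (Rabs M + k / F t1) / (2 * k) + 1).
assert (Hkf : 0 < k / F t1) by (apply Rdiv_lt_0_compat; auto; apply HFp; lra).
assert (HX : t1 <= X).
{ unfold X. assert (0 <= (Rabs M + k / F t1) / (2 * k))
  by (apply Rdiv_le_0_compat; pose proof (Rabs_pos M); lra). lra. }
exists X. split; auto.
assert (0 < 1 / F X) by (apply Rdiv_lt_0_compat; [lra|apply HFp; auto]).
pose proof (HFp t1 (Rle_refl _)) as HF1. pose proof (HFp X HX) as HFX.
set (fx := F X) in *. set (f1 := F t1) in *.
assert (E : k * (2 * X + 1 / fx) - k * (2 * t1 + 1 / f1) = Rabs M + 2 * k + k * (1 / fx))
  by (unfold X; field; repeat split; lra).
rewrite E. pose proof (Rle_abs M). assert (0 < k * (1 / fx)) by (apply Rmult_lt_0_compat; lra). lra.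
Qed.

Lemma Fz_sq_le z1 z2 (w w1 : R -> Cx) t :
  Fz z1 z2 w w1 t * Fz z1 z2 w w1 t <= (z1 * z1 + z2 * z2) * (Cnorm2 (w t) * Cnorm2 (w1 t)).
Proof.
unfold Fz, Cnorm2, Cre, Cim.
set (X := fst (w t) * fst (w1 t) + snd (w t) * snd (w1 t)).
set (Y := fst (w t) * snd (w1 t) - snd (w t) * fst (w1 t)).
assert (E : (fst (w t) * fst (w t) + snd (w t) * snd (w t))
  * (fst (w1 t) * fst (w1 t) + snd (w1 t) * snd (w1 t))
  = X * X + Y * Y) by (unfold X, Y; ring).
rewrite E. pose proof (pow2_ge_0 (z1 * Y + z2 * X)). nra.
Qed.

(* With a = F^2 / d, AM-GM gives 2 - 1/a <= a, and the hypotheses give dl / n * a <= S. *)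
Lemma riccati_bound dl n S T F d : 0 < dl -> 0 < n -> 0 <= S -> 0 <= T -> 0 < F ->
  F * F <= n * (S * T) -> dl * T <= d -> dl / n * (2 - d / (F * F)) <= S.
Proof.
intros Hdl Hn HS HT HF CS Dg. set (k := dl / n).
assert (Hk : 0 < k) by (unfold k; apply Rdiv_lt_0_compat; lra).
assert (HFF : 0 < F * F) by nra.
assert (HST : 0 < S * T) by nra.
assert (HT0 : 0 < T) by (destruct (Rle_lt_or_eq_dec _ _ HT); auto; subst; lra).
assert (Hd : 0 < d) by nra.
assert (Hkey : k * (F * F) <= S * d).
{ unfold k. apply (Rmult_le_reg_l n); auto.
  replace (n * (dl / n * (F * F))) with (dl * (F * F)) by (field; lra).
  assert (n * S * (dl * T) <= n * S * d) by (apply Rmult_le_compat_l; [apply Rmult_le_pos; lra | lra]).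
  assert (dl * (F * F) <= dl * (n * (S * T))) by (apply Rmult_le_compat_l; lra).
  replace (n * (S * d)) with (n * S * d) by ring.
  replace (dl * (n * (S * T))) with (n * S * (dl * T)) in H0 by ring. lra. }
set (a := F * F / d).
assert (Ha : 0 < a) by (unfold a; apply Rdiv_lt_0_compat; lra).
assert (Hama : 2 <= a + / a).
{ apply (Rmult_le_reg_l a); auto. replace (a * (a + / a)) with (a * a + 1) by (field; lra).
  pose proof (pow2_ge_0 (a - 1)). nra. }
assert (E1 : d / (F * F) = / a) by (unfold a; field; split; lra).
rewrite E1.
assert (HSa : k * a <= S).
{ unfold a. apply (Rmult_le_reg_r d); auto.
  replace (k * (F * F / d) * d) with (k * (F * F)) by (field; lra). lra. }
assert (k * (2 - / a) <= k * a) by (apply Rmult_le_compat_l; lra). lra.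
Qed.

Section LimitPoint.
Variables (m : nat) (c1 c2 mu1 mu2 z1 z2 t0 dl : R).
Let Q := Qpot m c1 c2 mu1 mu2.
Hypothesis Ht0 : 1 <= t0.
Hypothesis Hdl : 0 < dl.
Hypothesis Hq : forall t, t0 <= t -> dl <= z1 /\ dl <= z1 * fst (Q t) - z2 * snd (Q t).

Lemma dFz_ge_norm w w1 t : t0 <= t -> dl * (Cnorm2 (w1 t) + Cnorm2 (w t)) <= dFz z1 z2 Q w w1 t.
Proof.
intros Ht. destruct (Hq t Ht) as [H1 H2]. unfold dFz, Cnorm2, Cre, Cim.
set (T := fst (w1 t) * fst (w1 t) + snd (w1 t) * snd (w1 t)).
set (S := fst (w t) * fst (w t) + snd (w t) * snd (w t)).
assert (0 <= T) by (unfold T; nra). assert (0 <= S) by (unfold S; nra).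
assert (dl * T <= z1 * T) by (apply Rmult_le_compat_r; auto).
assert (dl * S <= (z1 * fst (Q t) - z2 * snd (Q t)) * S) by (apply Rmult_le_compat_r; auto).
lra.
Qed.

Lemma Fz_mono w w1 w2 s t : ode_sol Q w w1 w2 -> t0 <= s -> s <= t -> Fz z1 z2 w w1 s <= Fz z1 z2 w w1 t.
Proof.
intros H Hs Hst. apply (le_of_derive_ge0 _ (dFz z1 z2 Q w w1)); auto.
intros x Hx. split. apply (is_derive_Fz Q w w1 w2); auto; lra.
pose proof (dFz_ge_norm w w1 x ltac:(lra)). pose proof (Cnorm2_ge0 (w1 x)). pose proof (Cnorm2_ge0 (w x)).
  nra.
Qed.

Lemma L2_of_Fz_nonpos w w1 w2 : ode_sol Q w w1 w2 -> (forall t, t0 <= t -> Fz z1 z2 w w1 t <= 0)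
    -> L2_on Rpos w.
Proof.
intros H Hneg.
destruct (ode_sol_bounded_near0 _ _ _ _ _ _ _ _ t0 H ltac:(lra)) as [Bl HBl].
apply (L2_on_Rpos_of_bounds w t0 Bl (- Fz z1 z2 w w1 t0 / dl)); auto; try lra.
- exact (ode_sol_continuous _ _ _ _ H).
- intros a b Ha Hab.
  apply Rle_trans with ((fun t => Fz z1 z2 w w1 t / dl) b - (fun t => Fz z1 z2 w w1 t / dl) a).
  + apply (RInt_le_primitive_diff (fun s => Cnorm2 (w s)) (fun t => Fz z1 z2 w w1 t / dl)
    (fun t => dFz z1 z2 Q w w1 t / dl) a b (a / 2) (b + 1)); try lra.
    * intros x Hx. apply (ode_sol_continuous _ _ _ _ H). lra.
    * intros x Hx. split.
      -- eapply is_derive_eq.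
         apply (@is_derive_scal_l R_AbsRing R_NormedModule (Fz z1 z2 w w1) x (dFz z1 z2 Q w w1 x) (/ dl)).
         ++ apply (is_derive_Fz Q w w1 w2); auto; lra.
         ++ unfold_ops. unfold Rdiv. ring.
      -- pose proof (dFz_ge_norm w w1 x ltac:(lra)). pose proof (Cnorm2_ge0 (w1 x)).
         apply (Rmult_le_reg_l dl); auto.
           replace (dl * (dFz z1 z2 Q w w1 x / dl)) with (dFz z1 z2 Q w w1 x) by (field; lra). nra.
  + cbv beta. pose proof (Hneg b ltac:(lra)). pose proof (Fz_mono w w1 w2 t0 a H ltac:(lra) Ha).
    unfold Rdiv. assert (0 < / dl) by (apply Rinv_0_lt_compat; lra). nra.
Qed.

(* Once Fz > 0 it stays positive, and dl/n (2 t + 1 / Fz) is a primitive bounded above by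
   |w|^2 that grows linearly, so |w|^2 is not integrable. *)
Lemma not_L2_of_Fz_pos w w1 w2 t1 : ode_sol Q w w1 w2 -> t0 <= t1 -> 0 < Fz z1 z2 w w1 t1 -> ~ L2_on Rpos w.
Proof.
intros H Ht1 HF1.
destruct (Hq t0 (Rle_refl _)) as [Hz1 _].
set (n := z1 * z1 + z2 * z2). assert (Hn : 0 < n) by (unfold n; nra).
set (F := Fz z1 z2 w w1).
assert (HFp : forall t, t1 <= t -> 0 < F t).
{ intros t Ht. pose proof (Fz_mono w w1 w2 t1 t H Ht1 Ht). unfold F. lra. }
apply (not_L2_on_Rpos_of_primitive w t1 (fun s => dl / n * (2 * s + 1 / F s))
  (fun t => dl / n * (2 - dFz z1 z2 Q w w1 t / (F t * F t)))); try lra.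
- exact (ode_sol_continuous _ _ _ _ H).
- intros t Ht. split.
  + apply is_derive_lin_plus_inv. apply (is_derive_Fz Q w w1 w2 z1 z2 t H); lra. pose proof (HFp t Ht); lra.
  + pose proof (dFz_ge_norm w w1 t ltac:(lra)) as Dg.
    pose proof (Cnorm2_ge0 (w t)). pose proof (Cnorm2_ge0 (w1 t)).
    apply (riccati_bound dl n (Cnorm2 (w t)) (Cnorm2 (w1 t)));
      [lra|lra|lra|lra|apply HFp; lra|apply Fz_sq_le|nra].
- apply lin_plus_inv_unbounded; auto. apply Rdiv_lt_0_compat; lra.
Qed.
Lemma z1_pos : 0 < z1.
Proof. destruct (Hq t0 (Rle_refl _)). lra. Qed.

Lemma LP_comb_not_L2 v v1 v2 w w1 w2 : ode_sol Q v v1 v2 -> ode_sol Q w w1 w2 ->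
  Wr v v1 w w1 t0 <> (0,0) -> exists al be, ~ L2_on Rpos (comb al be v w).
Proof.
intros Hv Hw HD. unfold Wr in HD.
destruct (lin2_solvable (v t0) (v1 t0) (w t0) (w1 t0) (1,0) (z1, -z2) HD) as [al [be [S1 S2]]].
exists al, be.
apply (not_L2_of_Fz_pos (comb al be v w) (comb al be v1 w1) (comb al be v2 w2) t0).
- apply ode_sol_comb; auto.
- lra.
- rewrite (Fz_at_data z1 z2 _ _ t0 S1 S2). pose proof z1_pos. nra.
Qed.

Lemma LP_unique v v1 v2 w w1 w2 : ode_sol Q v v1 v2 -> ode_sol Q w w1 w2 -> L2_on Rpos v -> L2_on Rpos w ->
  (exists x, 0 < x /\ w x <> (0,0)) -> exists c, forall x, 0 < x -> v x = Cmul c (w x).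
Proof.
intros Hv Hw Lv Lw [x1 [Hx1 Hwx]].
assert (W0 : Wr v v1 w w1 t0 = (0,0)).
{ apply NNPP. intros HD.
  destruct (LP_comb_not_L2 v v1 v2 w w1 w2 Hv Hw HD) as [al [be Hnot]]. apply Hnot.
  apply L2_on_Rpos_comb; auto.
  - exact (ode_sol_continuous _ _ _ _ Hv).
  - exact (ode_sol_continuous _ _ _ _ Hw). }
assert (W1 : Wr v v1 w w1 x1 = (0,0)) by (rewrite (Wr_const Q v v1 v2 w w1 w2 x1 t0); auto; lra).
unfold Wr in W1.
destruct (Wr0_proportional (v x1) (v1 x1) (w x1) (w1 x1) Hwx W1) as [R1 R2].
set (c := Cmul (v x1) (Cinv (w x1))) in R1, R2.
exists c. intros x Hx.
destruct (ode_sol_zero_data m c1 c2 mu1 mu2 (comb (1,0) (Copp c) v w) (comb (1,0) (Copp c) v1 w1)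
   (comb (1,0) (Copp c) v2 w2) x1 (ode_sol_comb Q _ _ _ _ _ _ _ _ Hv Hw) Hx1 R1 R2 x Hx) as [U _].
apply comb_opp_zero. exact U.
Qed.

Variables (y1 y1p y1pp y2 y2p y2pp : R -> Cx).
Hypothesis Hy1 : ode_sol Q y1 y1p y1pp.
Hypothesis Hy2 : ode_sol Q y2 y2p y2pp.
Hypothesis HW : forall t, 0 < t -> Wr y1 y1p y2 y2p t = (1,0).

Lemma LP_not_L2_exists : exists v, solvesQ Q v /\ ~ L2_on Rpos v.
Proof.
assert (HD : Wr y1 y1p y2 y2p t0 <> (0,0)) by (rewrite (HW t0 ltac:(lra)); intros E; injection E; lra).
destruct (LP_comb_not_L2 _ _ _ _ _ _ Hy1 Hy2 HD) as [al [be Hnot]].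
exists (comb al be y1 y2). split; auto.
exists (comb al be y1p y2p), (comb al be y1pp y2pp). apply ode_sol_comb; auto.
Qed.

Lemma Wr1_values_pos s : 0 < s -> 0 < Cnorm2 (y2 s) + Cnorm2 (Copp (y1 s)).
Proof.
intros Hs. pose proof (Cnorm2_ge0 (y2 s)). pose proof (Cnorm2_ge0 (Copp (y1 s))).
apply Rnot_le_lt. intros Hle.
assert (E2 : y2 s = (0,0)) by (apply Cnorm2_eq0; lra).
assert (E1 : Copp (y1 s) = (0,0)) by (apply Cnorm2_eq0; lra).
pose proof (HW s Hs) as HWs. unfold Wr in HWs. rewrite E2 in HWs.
destruct (y1 s) as [q1 q2]. unfold Copp, Cre, Cim in E1; cbn [fst snd] in E1.
injection E1 as E11 E12.
assert (q1 = 0) by lra. assert (q2 = 0) by lra. subst q1 q2.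
unfold Cadd, Cmul, Copp, Cre, Cim in HWs; cbn [fst snd] in HWs. injection HWs as H1 H2. lra.
Qed.

(* Normalized coefficients of the combination y2(s) y1 - y1(s) y2, which vanishes at s. *)
Let vanishing_coef (s : R) : Cx * Cx := normalize2 (y2 s) (Copp (y1 s)).

Lemma vanishing_coef_norm s : 0 < s ->
  Cnorm2 (fst (vanishing_coef s)) + Cnorm2 (snd (vanishing_coef s)) = 1.
Proof. intros Hs. apply normalize2_norm, Wr1_values_pos, Hs. Qed.

Lemma vanishing_comb_Fz s t : t0 <= t <= s ->
  Fz z1 z2 (comb (fst (vanishing_coef s)) (snd (vanishing_coef s)) y1 y2)
           (comb (fst (vanishing_coef s)) (snd (vanishing_coef s)) y1p y2p) t <= 0.
Proof.
intros Ht.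
set (a := fst (vanishing_coef s)). set (b := snd (vanishing_coef s)).
assert (Z : comb a b y1 y2 s = (0,0)).
{ unfold a, b, vanishing_coef, normalize2; cbn [fst snd]. rewrite comb_Cscal.
  unfold comb, Cscal, Cadd, Cmul, Copp, Cre, Cim; cbn [fst snd]. f_equal; ring. }
assert (F0 : Fz z1 z2 (comb a b y1 y2) (comb a b y1p y2p) s = 0)
  by (unfold Fz; rewrite Z; cbn [fst snd]; ring).
rewrite <- F0. apply (Fz_mono _ _ (comb a b y1pp y2pp)); try lra.
apply ode_sol_comb; auto.
Qed.

Lemma LP_comb_nonzero a b : Cnorm2 a + Cnorm2 b = 1 -> exists x, 0 < x /\ comb a b y1 y2 x <> (0,0).
Proof.
intros Hab. apply NNPP. intros Hno.
assert (Z : forall x, 0 < x -> comb a b y1 y2 x = (0,0)).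
{ intros x Hx. apply NNPP. intros Hne. apply Hno. exists x. auto. }
destruct (ode_sol_comb Q a b _ _ _ _ _ _ Hy1 Hy2 1 ltac:(lra)) as [D _].
apply derivC_iff in D. destruct D as [D1 D2].
assert (Loc : forall (f : R -> R) l, is_derive f 1 l -> (forall y, 0 < y -> f y = 0) -> l = 0).
{ intros f l Hf Hz.
  assert (Hc : is_derive (fun _ : R => 0) 1 l).
  { apply (is_derive_ext_loc f); auto. apply (locally_interval _ 1 0 p_infty); simpl; try lra; auto. }
  apply is_derive_unique in Hc. rewrite Derive_const in Hc. auto. }
assert (P1 : fst (comb a b y1p y2p 1) = 0) by
  (apply (Loc _ _ D1); intros y Hy; rewrite (Z y Hy); reflexivity).
assert (P2 : snd (comb a b y1p y2p 1) = 0) by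
  (apply (Loc _ _ D2); intros y Hy; rewrite (Z y Hy); reflexivity).
assert (E1 : comb a b y1p y2p 1 = (0,0)) by
  (rewrite (surjective_pairing (comb a b y1p y2p 1)), P1, P2; reflexivity).
destruct (comb_Wr1_zero (y1 1) (y1p 1) (y2 1) (y2p 1) a b (HW 1 ltac:(lra)) (Z 1 ltac:(lra)) E1) as [Ea Eb].
subst a b. unfold Cnorm2, Cre, Cim in Hab; cbn [fst snd] in Hab. lra.
Qed.

(* The L2 solution is a limit of solutions vanishing at t0 + n: their functional Fz
   is nonpositive on [t0, t0 + n] by monotonicity, and this survives in the limit. *)
Lemma LP_L2_exists : exists w, solvesQ Q w /\ L2_on Rpos w /\ (exists x, 0 < x /\ w x <> (0,0)).
Proof.
set (s := fun n : nat => t0 + INR n).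
assert (Hs : forall n, t0 <= s n) by (intros n; unfold s; pose proof (pos_INR n); lra).
set (a := fun n => fst (vanishing_coef (s n))). set (b := fun n => snd (vanishing_coef (s n))).
assert (Nm : forall n, Cnorm2 (a n) + Cnorm2 (b n) = 1)
  by (intros n; apply vanishing_coef_norm; pose proof (Hs n); lra).
pose proof (fun n => norm1_coord_bounds _ _ (Nm n)) as Bd.
destruct (bounded_seq4_cv_subseq (fun n => fst (a n)) (fun n => snd (a n)) (fun n => fst (b n))
  (fun n => snd (b n))
   (fun n => proj1 (Bd n)) (fun n => proj1 (proj2 (Bd n)))
   (fun n => proj1 (proj2 (proj2 (Bd n)))) (fun n => proj2 (proj2 (proj2 (Bd n)))))
  as [phi [Hphi [la [lb [lc [ld [C1 [C2 [C3 C4]]]]]]]]].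
set (u := comb (la, lb) (lc, ld) y1 y2).
set (u1 := comb (la, lb) (lc, ld) y1p y2p).
set (u2 := comb (la, lb) (lc, ld) y1pp y2pp).
assert (Su : ode_sol Q u u1 u2) by (apply ode_sol_comb; auto).
exists u. split; [exists u1, u2; exact Su|split].
- apply (L2_of_Fz_nonpos u u1 u2 Su). intros t Ht.
  destruct (nat_above (t - t0)) as [Nk HNk].
  apply (Un_cv_le0 _ _ Nk (Un_cv_Fz_comb z1 z2 y1 y2 y1p y2p _ _ _ _ la lb lc ld t C1 C2 C3 C4)).
  intros k Hk. apply (vanishing_comb_Fz (s (phi k)) t). split; auto.
  unfold s. pose proof (strict_incr_ge_id phi Hphi k). assert (INR Nk <= INR (phi k)) by (apply le_INR; lia).
    lra.
- apply LP_comb_nonzero.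
  apply (UL_sequence (fun k => Cnorm2 (a (phi k)) + Cnorm2 (b (phi k)))).
  + unfold Cnorm2, Cre, Cim. cbn [fst snd]. solve_Un_cv.
  + intros eps He. exists O. intros n _. rewrite Nm. unfold Rdist. rewrite Rminus_diag, Rabs_R0. lra.
Qed.
End LimitPoint.

(** * Power series solutions *)

Definition N1 (z : Cx) := Rabs (fst z) + Rabs (snd z).

Lemma N1_ge0 z : 0 <= N1 z.
Proof. unfold N1. pose proof (Rabs_pos (fst z)). pose proof (Rabs_pos (snd z)). lra. Qed.

Lemma N1_mul a b : N1 (Cmul a b) <= N1 a * N1 b.
Proof.
destruct a as [a1 a2], b as [b1 b2]. unfold N1, Cmul, Cre, Cim; cbn [fst snd].
pose proof (Rabs_triang (a1 * b1) (- (a2 * b2))). pose proof (Rabs_triang (a1 * b2) (a2 * b1)).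
rewrite Rabs_Ropp in H. rewrite !Rabs_mult in *. unfold Rminus.
assert (Rabs a1 * Rabs b1 + Rabs a2 * Rabs b2 + (Rabs a1 * Rabs b2 + Rabs a2 * Rabs b1)
  = (Rabs a1 + Rabs a2) * (Rabs b1 + Rabs b2)) by ring.
lra.
Qed.

Lemma N1_add a b : N1 (Cadd a b) <= N1 a + N1 b.
Proof.
destruct a as [a1 a2], b as [b1 b2]. unfold N1, Cadd, Cre, Cim; cbn [fst snd].
pose proof (Rabs_triang a1 b1). pose proof (Rabs_triang a2 b2). lra.
Qed.

Lemma N1_scal s z : N1 (Cscal s z) = Rabs s * N1 z.
Proof. unfold N1, Cscal; cbn [fst snd]. rewrite !Rabs_mult. ring. Qed.

Lemma sum_ge_term (B : nat -> R) j N : (forall n, 0 <= B n) -> (j <= N)%nat -> B j <= sum_f_R0 B N.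
Proof.
intros H0 HjN. induction N.
- assert (j = 0%nat) by lia. subst. simpl. lra.
- simpl. destruct (Nat.eq_dec j (S N)).
  + subst. assert (0 <= sum_f_R0 B N) by (apply cond_pos_sum; auto). lra.
  + specialize (IHN ltac:(lia)). specialize (H0 (S N)). lra.
Qed.

Lemma CV_radius_infinite (a : nat -> R) : (forall r, 1 <= r -> exists M, forall n, Rabs (a n) * r ^ n <= M) ->
  forall x, Rbar_lt (Rabs x) (CV_radius a).
Proof.
intros H x. set (r := Rabs x + 1). assert (Hr : 1 <= r) by (unfold r; pose proof (Rabs_pos x); lra).
destruct (H r Hr) as [M HM].
destruct (CV_radius_bounded a) as [Hub _].
assert (E : Rbar_le r (CV_radius a)).
{ apply Hub. exists M. intros n. rewrite Rabs_mult, (Rabs_right (r ^ n))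
  by (apply Rle_ge, pow_le; lra). apply HM. }
apply Rbar_lt_le_trans with r; auto. simpl. unfold r. lra.
Qed.

Lemma fst_N1 z : Rabs (fst z) <= N1 z.
Proof. unfold N1. pose proof (Rabs_pos (snd z)). lra. Qed.

Lemma snd_N1 z : Rabs (snd z) <= N1 z.
Proof. unfold N1. pose proof (Rabs_pos (fst z)). lra. Qed.

Lemma ex_pseries_lin2 (a b : nat -> R) al be x : ex_pseries a x -> ex_pseries b x
    -> ex_pseries (fun k => al * a k + be * b k) x.
Proof.
intros Ha Hb. apply (ex_pseries_ext (PS_plus (PS_scal al a) (PS_scal be b))).
- intros n. reflexivity.
- apply @ex_pseries_plus; apply @ex_pseries_scal; auto; intros; apply Rmult_comm.
Qed.

Lemma PSeries_lin2 (a b : nat -> R) al be x : ex_pseries a x -> ex_pseries b x ->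
  PSeries (fun k => al * a k + be * b k) x = al * PSeries a x + be * PSeries b x.
Proof.
intros Ha Hb. rewrite (PSeries_ext _ (PS_plus (PS_scal al a) (PS_scal be b))) by (intros; reflexivity).
rewrite PSeries_plus. rewrite !PSeries_scal. reflexivity.
apply @ex_pseries_scal; auto; intros; apply Rmult_comm.
apply @ex_pseries_scal; auto; intros; apply Rmult_comm.
Qed.

Lemma INR_SS_mult k : INR (S k) * INR (S (S k)) = INR (k + 2) * INR (k + 1).
Proof. rewrite !S_INR, !plus_INR. simpl. ring. Qed.

Lemma INR_SS_cancel k X : INR (S k) * (INR (S (S k)) * (/ (INR (k + 2) * INR (k + 1)) * X)) = X.
Proof.
assert (Hd : INR (k + 2) * INR (k + 1) <> 0) by (rewrite !plus_INR; simpl; pose proof (pos_INR k); nra).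
rewrite <- Rmult_assoc, INR_SS_mult, <- Rmult_assoc, Rinv_r by auto. ring.
Qed.

Definition ode_sol_R (Q : R -> Cx) (w w1 w2 : R -> Cx) : Prop :=
  forall t, derivC w w1 t /\ derivC w1 w2 t /\ w2 t = Cmul (Q t) (w t).

Section PowerSeries.
Variables (m : nat) (c1 c2 mu1 mu2 : R) (A0 A1 : Cx).

(* (k + 2) (k + 1) a_(k+2) = mu a_k + c a_(k-m) for w'' = (c t^m + mu) w; coef_table n
   memoizes a_0, ..., a_(n+1). *)
Definition coef_step (k : nat) (f : nat -> Cx) : Cx :=
  Cscal (/ (INR (k + 2) * INR (k + 1)))
    (Cadd (Cmul (mu1, mu2) (f k)) (if (m <=? k)%nat then Cmul (c1, c2) (f (k - m)%nat) else (0,0))).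

Fixpoint coef_table (n : nat) : nat -> Cx :=
  match n with
  | O => fun j => if (j =? 0)%nat then A0 else A1
  | S n' => fun j => if (j <=? S n')%nat then coef_table n' j else coef_step n' (coef_table n')
  end.

Definition coef (j : nat) : Cx := coef_table j j.

Lemma coef_table_S n j : (j <= S n)%nat -> coef_table (S n) j = coef_table n j.
Proof. intros H. simpl. destruct (Nat.leb_spec j (S n)); [reflexivity|lia]. Qed.

Lemma coef_table_stable n d j : (j <= S n)%nat -> coef_table (n + d) j = coef_table n j.
Proof.
intros H. induction d. rewrite Nat.add_0_r. reflexivity.
rewrite Nat.add_succ_r, coef_table_S by lia. exact IHd.
Qed.

Lemma coef_table_coef n j : (j <= S n)%nat -> coef_table n j = coef j.
Proof.
intros H. unfold coef. destruct (le_lt_dec j n).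
- replace n with (j + (n - j))%nat at 1 by lia. rewrite coef_table_stable by lia. reflexivity.
- assert (j = S n) by lia. subst j. rewrite coef_table_S by lia. reflexivity.
Qed.

Lemma coef0 : coef 0 = A0.
Proof. reflexivity. Qed.

Lemma coef1 : coef 1 = A1.
Proof. reflexivity. Qed.

Lemma coef_rec k : coef (S (S k)) = coef_step k coef.
Proof.
unfold coef at 1. rewrite coef_table_S by lia.
change (coef_table (S k) (S (S k))) with
  (if (S (S k) <=? S k)%nat then coef_table k (S (S k)) else coef_step k (coef_table k)).
rewrite (proj2 (Nat.leb_gt _ _)) by lia.
unfold coef_step. rewrite !(coef_table_coef k) by lia. reflexivity.
Qed.

Lemma coef_weighted_step r M k : 1 <= r ->
  (forall j, (j <= S k)%nat -> N1 (coef j) * r ^ j <= M) ->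
  N1 (coef (S (S k))) * r ^ S (S k) <=
    (N1 (mu1, mu2) + N1 (c1, c2)) * r ^ (m + 2) * M / (INR (k + 2) * INR (k + 1)).
Proof.
intros Hr HB.
assert (HM : 0 <= M) by (apply Rle_trans with (N1 (coef 0) * r ^ 0);
  [simpl; rewrite Rmult_1_r; apply N1_ge0|apply HB; lia]).
rewrite coef_rec. unfold coef_step. rewrite N1_scal.
set (den := INR (k + 2) * INR (k + 1)).
assert (Hden0 : 0 < den) by (unfold den; rewrite !plus_INR; simpl; pose proof (pos_INR k); nra).
rewrite Rabs_right by (apply Rle_ge; left; apply Rinv_0_lt_compat; lra).
assert (T1 : N1 (Cmul (mu1, mu2) (coef k)) * r ^ S (S k) <= N1 (mu1, mu2) * (M * r ^ (m + 2))).
{ apply Rle_trans with (N1 (mu1, mu2) * N1 (coef k) * r ^ S (S k)).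
  { apply Rmult_le_compat_r; [apply pow_le; lra|apply N1_mul]. }
  replace (r ^ S (S k)) with (r ^ k * r ^ 2) by (rewrite <- pow_add; f_equal; lia).
  rewrite Rmult_assoc, <- (Rmult_assoc (N1 (coef k))).
  apply Rmult_le_compat_l; [apply N1_ge0|].
  apply Rmult_le_compat; [apply Rmult_le_pos; [apply N1_ge0|apply pow_le; lra]
    | apply pow_le; lra | apply HB; lia | apply Rle_pow; [lra|lia]]. }
assert (T2 : N1 (if (m <=? k)%nat then Cmul (c1, c2) (coef (k - m)) else (0, 0)) * r ^ S (S k)
    <= N1 (c1, c2) * (M * r ^ (m + 2))).
{ destruct (Nat.leb_spec m k).
  - apply Rle_trans with (N1 (c1, c2) * N1 (coef (k - m)) * r ^ S (S k)).
    { apply Rmult_le_compat_r; [apply pow_le; lra|apply N1_mul]. }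
    replace (r ^ S (S k)) with (r ^ (k - m) * r ^ (m + 2)) by (rewrite <- pow_add; f_equal; lia).
    rewrite Rmult_assoc, <- (Rmult_assoc (N1 (coef (k - m)))).
    apply Rmult_le_compat_l; [apply N1_ge0|]. apply Rmult_le_compat_r; [apply pow_le; lra|]. apply HB; lia.
  - replace (N1 (0,0)) with 0 by (unfold N1; cbn [fst snd]; rewrite Rabs_R0; ring). rewrite Rmult_0_l.
    apply Rmult_le_pos; [apply N1_ge0|apply Rmult_le_pos; auto; apply pow_le; lra]. }
pose proof (N1_add (Cmul (mu1, mu2) (coef k))
  (if (m <=? k)%nat then Cmul (c1, c2) (coef (k - m)) else (0, 0))) as Hadd.
assert (Hrp : 0 <= r ^ S (S k)) by (apply pow_le; lra).
set (X := N1 (Cadd _ _)) in *.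
unfold Rdiv. apply (Rmult_le_reg_r den); auto.
replace (/ den * X * r ^ S (S k) * den) with (X * r ^ S (S k)) by (field; lra).
replace ((N1 (mu1, mu2) + N1 (c1, c2)) * r ^ (m + 2) * M * / den * den)
  with ((N1 (mu1, mu2) + N1 (c1, c2)) * r ^ (m + 2) * M) by (field; lra).
apply Rle_trans with ((N1 (Cmul (mu1, mu2) (coef k))
  + N1 (if (m <=? k)%nat then Cmul (c1, c2) (coef (k - m)) else (0, 0))) * r ^ S (S k)).
- apply Rmult_le_compat_r; auto.
- lra.
Qed.

(* The recursion divides by (k+2)(k+1), which eventually beats the factor K r^(m+2). *)
Lemma coef_bound r : 1 <= r -> exists M, forall n, N1 (coef n) * r ^ n <= M.
Proof.
intros Hr.
set (B := fun n => N1 (coef n) * r ^ n).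
assert (HB0 : forall n, 0 <= B n) by
  (intros n; unfold B; apply Rmult_le_pos; [apply N1_ge0|apply pow_le; lra]).
set (K := N1 (mu1, mu2) + N1 (c1, c2)).
assert (HK : 0 <= K) by (unfold K; pose proof (N1_ge0 (mu1,mu2)); pose proof (N1_ge0 (c1,c2)); lra).
destruct (nat_above (K * r ^ (m + 2))) as [k0 Hk0].
set (M := sum_f_R0 B (S k0)).
assert (HM : 0 <= M) by (apply cond_pos_sum; auto).
exists M.
assert (Main : forall n j, (j <= n)%nat -> B j <= M).
{ induction n; intros j Hj.
  - apply sum_ge_term; auto; lia.
  - destruct (Nat.eq_dec j (S n)); [|apply IHn; lia]. subst j.
    destruct (le_lt_dec (S n) (S k0)); [apply sum_ge_term; auto|].
    destruct n as [|k]; [lia|].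
    pose proof (coef_weighted_step r M k Hr IHn) as Hstep. fold K in Hstep.
    set (den := INR (k + 2) * INR (k + 1)) in Hstep.
    assert (Hden : INR k0 + 1 <= den).
    { unfold den. rewrite !plus_INR. simpl.
      pose proof (le_INR k0 k ltac:(lia)). pose proof (pos_INR k). nra. }
    assert (HKM : K * r ^ (m + 2) * M <= INR k0 * M) by (apply Rmult_le_compat_r; auto).
    unfold B. apply Rle_trans with (1 := Hstep).
    apply (Rmult_le_reg_r den); [pose proof (pos_INR k0); lra|].
    unfold Rdiv. rewrite Rmult_assoc, Rinv_l, Rmult_1_r by (pose proof (pos_INR k0); lra).
    nra. }
intros n. apply (Main n n). lia.
Qed.
Definition coef_re k := fst (coef k).
Definition coef_im k := snd (coef k).

Lemma CV_radius_coef_re x : Rbar_lt (Rabs x) (CV_radius coef_re).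
Proof.
apply CV_radius_infinite. intros r Hr. destruct (coef_bound r Hr) as [M HM]. exists M. intros n.
apply Rle_trans with (2 := HM n). apply Rmult_le_compat_r. apply pow_le; lra. apply fst_N1.
Qed.

Lemma CV_radius_coef_im x : Rbar_lt (Rabs x) (CV_radius coef_im).
Proof.
apply CV_radius_infinite. intros r Hr. destruct (coef_bound r Hr) as [M HM]. exists M. intros n.
apply Rle_trans with (2 := HM n). apply Rmult_le_compat_r. apply pow_le; lra. apply snd_N1.
Qed.

Lemma PS_derive2_coef_re k : PS_derive (PS_derive coef_re) k =
  1 * (mu1 * coef_re k + - mu2 * coef_im k) + 1 * (c1 * PS_incr_n coef_re m k + - c2 * PS_incr_n coef_im m k).
Proof.
unfold PS_derive. unfold coef_re at 1. rewrite coef_rec.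
  unfold coef_step, Cscal, Cadd, Cmul, Cre, Cim; cbn [fst snd].
rewrite INR_SS_cancel. rewrite !PS_incr_n_simplify.
destruct (le_lt_dec m k); destruct (Nat.leb_spec m k); try lia; cbn [fst snd]; unfold coef_re, coef_im;
  unfold_ops; ring.
Qed.

Lemma PS_derive2_coef_im k : PS_derive (PS_derive coef_im) k =
  1 * (mu1 * coef_im k + mu2 * coef_re k) + 1 * (c1 * PS_incr_n coef_im m k + c2 * PS_incr_n coef_re m k).
Proof.
unfold PS_derive. unfold coef_im at 1. rewrite coef_rec.
  unfold coef_step, Cscal, Cadd, Cmul, Cre, Cim; cbn [fst snd].
rewrite INR_SS_cancel. rewrite !PS_incr_n_simplify.
destruct (le_lt_dec m k); destruct (Nat.leb_spec m k); try lia; cbn [fst snd]; unfold coef_re, coef_im;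
  unfold_ops; ring.
Qed.
Definition ps_sol t : Cx := (PSeries coef_re t, PSeries coef_im t).
Definition ps_sol1 t : Cx := (PSeries (PS_derive coef_re) t, PSeries (PS_derive coef_im) t).
Definition ps_sol2 t : Cx :=
  (PSeries (PS_derive (PS_derive coef_re)) t, PSeries (PS_derive (PS_derive coef_im)) t).

Lemma ps_sol_ode_sol : ode_sol_R (Qpot m c1 c2 mu1 mu2) ps_sol ps_sol1 ps_sol2.
Proof.
intros t.
assert (Ra : forall x, Rbar_lt (Rabs x) (CV_radius coef_re)) by (intros; apply CV_radius_coef_re).
assert (Rb : forall x, Rbar_lt (Rabs x) (CV_radius coef_im)) by (intros; apply CV_radius_coef_im).
assert (Ra' : forall x, Rbar_lt (Rabs x) (CV_radius (PS_derive coef_re)))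
  by (intros; rewrite CV_radius_derive; auto).
assert (Rb' : forall x, Rbar_lt (Rabs x) (CV_radius (PS_derive coef_im)))
  by (intros; rewrite CV_radius_derive; auto).
split; [|split].
- apply derivC_iff. unfold ps_sol, ps_sol1; cbn [fst snd]. split; apply is_derive_PSeries; auto.
- apply derivC_iff. unfold ps_sol1, ps_sol2; cbn [fst snd]. split; apply is_derive_PSeries; auto.
- assert (Ea : ex_pseries coef_re t) by (apply CV_radius_inside; auto).
  assert (Eb : ex_pseries coef_im t) by (apply CV_radius_inside; auto).
  assert (Eai : ex_pseries (PS_incr_n coef_re m) t) by (apply @ex_pseries_incr_n; auto).
  assert (Ebi : ex_pseries (PS_incr_n coef_im m) t) by (apply @ex_pseries_incr_n; auto).
  unfold ps_sol, ps_sol2, Qpot, Cmul, Cre, Cim; cbn [fst snd]. f_equal.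
  + rewrite (PSeries_ext _ _ t PS_derive2_coef_re).
    rewrite PSeries_lin2 by (apply ex_pseries_lin2; auto). rewrite !PSeries_lin2 by auto.
      rewrite !PSeries_incr_n. ring.
  + rewrite (PSeries_ext _ _ t PS_derive2_coef_im).
    rewrite PSeries_lin2 by (apply ex_pseries_lin2; auto). rewrite !PSeries_lin2 by auto.
      rewrite !PSeries_incr_n. ring.
Qed.

Lemma ps_sol_0 : ps_sol 0 = A0.
Proof.
unfold ps_sol. rewrite !PSeries_0. unfold coef_re, coef_im. rewrite coef0. destruct A0; reflexivity.
Qed.

Lemma ps_sol1_0 : ps_sol1 0 = A1.
Proof.
unfold ps_sol1. rewrite !PSeries_0. unfold PS_derive, coef_re, coef_im. rewrite coef1. destruct A1. simpl INR.
  cbn [fst snd].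
f_equal; ring.
Qed.
End PowerSeries.

Lemma ode_sol_R_derive Q w w1 w2 t : ode_sol_R Q w w1 w2 ->
  is_derive (fun s => fst (w s)) t (fst (w1 t)) /\ is_derive (fun s => snd (w s)) t (snd (w1 t)) /\
  is_derive (fun s => fst (w1 s)) t (fst (Q t) * fst (w t) - snd (Q t) * snd (w t)) /\
  is_derive (fun s => snd (w1 s)) t (fst (Q t) * snd (w t) + snd (Q t) * fst (w t)).
Proof.
intros H. destruct (H t) as [H1 [H2 H3]].
apply derivC_iff in H1. apply derivC_iff in H2. rewrite H3 in H2.
unfold Cmul, Cre, Cim in H2; simpl in H2. tauto.
Qed.

Lemma Wr_derive_R Q v v1 v2 w w1 w2 t : ode_sol_R Q v v1 v2 -> ode_sol_R Q w w1 w2 ->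
  is_derive (fun s => fst (Wr v v1 w w1 s)) t 0 /\ is_derive (fun s => snd (Wr v v1 w w1 s)) t 0.
Proof.
intros Hv Hw.
destruct (ode_sol_R_derive _ _ _ _ t Hv) as [A1 [A2 [A3 A4]]].
destruct (ode_sol_R_derive _ _ _ _ t Hw) as [B1 [B2 [B3 B4]]].
destruct (is_derive_Wr_parts (fun s => fst (v s)) (fun s => fst (w1 s)) (fun s => snd (v s))
  (fun s => snd (w1 s))
  (fun s => fst (v1 s)) (fun s => fst (w s)) (fun s => snd (v1 s)) (fun s => snd (w s)) _ _ _ _ _ _ _ _ t
  A1 B3 A2 B4 A3 B1 A4 B2) as [D1 D2].
unfold Wr, Cadd, Copp, Cmul, Cre, Cim; cbn [fst snd].
split; eapply is_derive_eq; try eassumption; ring_R.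
Qed.

Lemma Wr_const_R Q v v1 v2 w w1 w2 t : ode_sol_R Q v v1 v2 -> ode_sol_R Q w w1 w2 ->
  Wr v v1 w w1 t = Wr v v1 w w1 0.
Proof.
intros Hv Hw.
assert (K : forall a b, a <= b -> Wr v v1 w w1 a = Wr v v1 w w1 b).
{ intros a b Hab.
  assert (E1 : fst (Wr v v1 w w1 a) = fst (Wr v v1 w w1 b)).
  { apply (eq_of_derive_0 (fun s => fst (Wr v v1 w w1 s)) a b Hab).
    intros x Hx. exact (proj1 (Wr_derive_R Q v v1 v2 w w1 w2 x Hv Hw)). }
  assert (E2 : snd (Wr v v1 w w1 a) = snd (Wr v v1 w w1 b)).
  { apply (eq_of_derive_0 (fun s => snd (Wr v v1 w w1 s)) a b Hab).
    intros x Hx. exact (proj2 (Wr_derive_R Q v v1 v2 w w1 w2 x Hv Hw)). }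
  destruct (Wr v v1 w w1 a), (Wr v v1 w w1 b). cbn in E1, E2. subst. reflexivity. }
destruct (Rle_dec t 0). apply K; auto. symmetry; apply K; lra.
Qed.

Lemma fundamental_system m c1 c2 mu1 mu2 :
  exists y1 y1p y1pp y2 y2p y2pp,
    ode_sol (Qpot m c1 c2 mu1 mu2) y1 y1p y1pp /\ ode_sol (Qpot m c1 c2 mu1 mu2) y2 y2p y2pp /\
    forall t, 0 < t -> Wr y1 y1p y2 y2p t = (1,0).
Proof.
pose proof (ps_sol_ode_sol m c1 c2 mu1 mu2 (1,0) (0,0)) as S1.
pose proof (ps_sol_ode_sol m c1 c2 mu1 mu2 (0,0) (1,0)) as S2.
exists (ps_sol m c1 c2 mu1 mu2 (1,0) (0,0)), (ps_sol1 m c1 c2 mu1 mu2 (1,0) (0,0)),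
  (ps_sol2 m c1 c2 mu1 mu2 (1,0) (0,0)).
exists (ps_sol m c1 c2 mu1 mu2 (0,0) (1,0)), (ps_sol1 m c1 c2 mu1 mu2 (0,0) (1,0)),
  (ps_sol2 m c1 c2 mu1 mu2 (0,0) (1,0)).
split; [intros t _; apply S1|split; [intros t _; apply S2|]].
intros t _. rewrite (Wr_const_R _ _ _ _ _ _ _ t S1 S2).
unfold Wr. rewrite !ps_sol_0, !ps_sol1_0. unfold Cadd, Copp, Cmul, Cre, Cim; cbn [fst snd]. f_equal; ring.
Qed.

(** * Reduction of the two equations *)

Lemma sin_sq_add_cos_sq x : sin x * sin x + cos x * cos x = 1.
Proof. pose proof (sin2_cos2 x). unfold Rsqr in H. lra. Qed.

Lemma de_moivre r al n : Cpow (r * cos al, r * sin al) n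
    = (r ^ n * cos (INR n * al), r ^ n * sin (INR n * al)).
Proof.
induction n.
- simpl. rewrite Rmult_0_l, cos_0, sin_0. f_equal; ring.
- change (Cpow (r * cos al, r * sin al) (S n))
  with (Cmul (r * cos al, r * sin al) (Cpow (r * cos al, r * sin al) n)).
  rewrite IHn. unfold Cmul, Cre, Cim; cbn [fst snd].
  rewrite S_INR. replace ((INR n + 1) * al) with (al + INR n * al) by ring.
  rewrite cos_plus, sin_plus. change (r ^ S n) with (r * r ^ n). f_equal; ring.
Qed.

Lemma Cexpi_mul a b : Cmul (Cexpi a) (Cexpi b) = Cexpi (a + b).
Proof. unfold Cexpi, Cmul, Cre, Cim; cbn [fst snd]. rewrite cos_plus, sin_plus. f_equal; ring. Qed.

Lemma q_plus_polar N phi t :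
  q_plus N phi t = Cscal (t ^ (N + 2)) (Cexpi (INR (N + 2) * (PI / 2) + INR (N + 2) * phi)).
Proof.
unfold q_plus.
replace ((0, t) : Cx) with (t * cos (PI / 2), t * sin (PI / 2)) by (rewrite cos_PI2, sin_PI2; f_equal; ring).
rewrite de_moivre.
replace ((t ^ (N + 2) * cos (INR (N + 2) * (PI / 2)), t ^ (N + 2) * sin (INR (N + 2) * (PI / 2))) : Cx)
  with (Cscal (t ^ (N + 2)) (Cexpi (INR (N + 2) * (PI / 2)))) by reflexivity.
rewrite <- (Cexpi_mul (INR (N + 2) * (PI / 2))).
unfold Cscal, Cmul, Cexpi, Cre, Cim; cbn [fst snd]. f_equal; ring.
Qed.

Lemma q_minus_polar N phi t :
  q_minus N phi (- t) = Cscal (t ^ (N + 2)) (Cexpi (INR (N + 2) * (3 * (PI / 2)) - INR (N + 2) * phi)).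
Proof.
unfold q_minus.
replace ((0, - t) : Cx) with (t * cos (3 * (PI / 2)), t * sin (3 * (PI / 2)))
  by (rewrite cos_3PI2, sin_3PI2; f_equal; ring).
rewrite de_moivre.
replace ((t ^ (N + 2) * cos (INR (N + 2) * (3 * (PI / 2))),
          t ^ (N + 2) * sin (INR (N + 2) * (3 * (PI / 2)))) : Cx)
  with (Cscal (t ^ (N + 2)) (Cexpi (INR (N + 2) * (3 * (PI / 2))))) by reflexivity.
replace (INR (N + 2) * (3 * (PI / 2)) - INR (N + 2) * phi)
  with (INR (N + 2) * (3 * (PI / 2)) + - INR (N + 2) * phi) by ring.
rewrite <- (Cexpi_mul (INR (N + 2) * (3 * (PI / 2)))).
unfold Cscal, Cmul, Cexpi, Cre, Cim; cbn [fst snd]. f_equal; ring.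
Qed.

Lemma Cexpi_Qpot m be ga (lam : Cx) t :
  Cmul (Copp (Cexpi be)) (Cadd lam (Cscal (t ^ m) (Cexpi ga))) =
  Qpot m (- cos (be + ga)) (- sin (be + ga)) (fst (Copp (Cmul (Cexpi be) lam)))
    (snd (Copp (Cmul (Cexpi be) lam))) t.
Proof.
destruct lam as [l1 l2]. unfold Qpot, Cscal, Cmul, Copp, Cadd, Cexpi, Cre, Cim; cbn [fst snd].
rewrite cos_plus, sin_plus. f_equal; ring.
Qed.

Lemma ode_normal_form_iff be (lam qx W W2 : Cx) :
  Cadd (Copp (Cmul (Cexpi (- be)) W2)) (Copp (Cmul qx W)) = Cmul lam W <->
  W2 = Cmul (Cmul (Copp (Cexpi be)) (Cadd lam qx)) W.
Proof.
pose proof (sin_sq_add_cos_sq be) as Hsc.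
unfold Cexpi. rewrite cos_neg, sin_neg.
set (k := cos be) in *. set (s := sin be) in *.
destruct lam as [l1 l2], qx as [q1 q2], W as [x1 x2], W2 as [y1 y2].
unfold Cadd, Copp, Cmul, Cre, Cim; cbn [fst snd].
set (R1 := l1 * x1 - l2 * x2 + (q1 * x1 - q2 * x2)).
set (R2 := l1 * x2 + l2 * x1 + (q1 * x2 + q2 * x1)).
split.
- intros E. injection E as E1 E2.
  assert (F1 : k * y1 + s * y2 = - R1) by (unfold R1; lra).
  assert (F2 : k * y2 - s * y1 = - R2) by (unfold R2; lra).
  assert (G1 : y1 = k * (k * y1 + s * y2) - s * (k * y2 - s * y1))
    by (transitivity (y1 * (s * s + k * k)); [rewrite Hsc; ring|ring]).
  assert (G2 : y2 = s * (k * y1 + s * y2) + k * (k * y2 - s * y1))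
    by (transitivity (y2 * (s * s + k * k)); [rewrite Hsc; ring|ring]).
  rewrite F1, F2 in G1, G2. f_equal.
  + rewrite G1. unfold R1, R2. ring.
  + rewrite G2. unfold R1, R2. ring.
- intros E. injection E as E1 E2. rewrite E1, E2. f_equal.
  + transitivity ((s * s + k * k) * (l1 * x1 - l2 * x2 + (q1 * x1 - q2 * x2)) - (q1 * x1 - q2 * x2));
    [ring|rewrite Hsc; ring].
  + transitivity ((s * s + k * k) * (l1 * x2 + l2 * x1 + (q1 * x2 + q2 * x1)) - (q1 * x2 + q2 * x1));
    [ring|rewrite Hsc; ring].
Qed.

Lemma solvesQ_ext (Q1 Q2 : R -> Cx) w : (forall t, Q1 t = Q2 t) -> solvesQ Q1 w -> solvesQ Q2 w.
Proof. intros E [w1 [w2 H]]. exists w1, w2. intros t Ht. rewrite <- E. apply H; auto. Qed.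

Lemma solves_Rpos_normal_form N phi lam w :
  solves Rpos (a_plus phi) (q_plus N phi) lam w <->
  solvesQ (fun t => Cmul (Copp (Cexpi (2 * phi))) (Cadd lam (q_plus N phi t))) w.
Proof.
unfold a_plus. replace (-2 * phi) with (- (2 * phi)) by ring.
split; intros [w1 [w2 H]]; exists w1, w2; intros t Ht; destruct (H t Ht) as [A [B C]];
  (split; [exact A|split; [exact B|]]).
- exact (proj1 (ode_normal_form_iff _ _ _ _ _) C).
- exact (proj2 (ode_normal_form_iff _ _ _ _ _) C).
Qed.

Lemma derivC_refl (f f1 : R -> Cx) t : derivC f f1 (- t)
    -> derivC (fun s => f (- s)) (fun s => Copp (f1 (- s))) t.
Proof.
intros H. apply derivC_iff in H. destruct H as [H1 H2]. apply derivC_iff.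
unfold Copp, Cre, Cim; cbn [fst snd].
split.
- eapply is_derive_eq. apply (is_derive_comp (fun s => fst (f s)) (fun s => - s)). exact H1.
  apply @is_derive_opp. apply @is_derive_id. unfold_ops. ring.
- eapply is_derive_eq. apply (is_derive_comp (fun s => snd (f s)) (fun s => - s)). exact H2.
  apply @is_derive_opp. apply @is_derive_id. unfold_ops. ring.
Qed.

Lemma derivC_refl' (f f1 : R -> Cx) t : derivC f f1 (- t)
    -> derivC (fun s => Copp (f (- s))) (fun s => f1 (- s)) t.
Proof.
intros H. apply derivC_iff in H. destruct H as [H1 H2]. apply derivC_iff.
unfold Copp, Cre, Cim; cbn [fst snd].
split.
- eapply is_derive_eq. apply @is_derive_opp.
  apply (is_derive_comp (fun s => fst (f s)) (fun s => - s)). exact H1.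
  apply @is_derive_opp. apply @is_derive_id. unfold_ops. ring.
- eapply is_derive_eq. apply @is_derive_opp.
  apply (is_derive_comp (fun s => snd (f s)) (fun s => - s)). exact H2.
  apply @is_derive_opp. apply @is_derive_id. unfold_ops. ring.
Qed.

Lemma derivC_ext (f g f1 : R -> Cx) t : (forall s, f s = g s) -> derivC f f1 t -> derivC g f1 t.
Proof.
intros E H. apply derivC_iff in H. apply derivC_iff. destruct H as [H1 H2]. split.
- eapply is_derive_ext; [|exact H1]. intros s; simpl; rewrite E; reflexivity.
- eapply is_derive_ext; [|exact H2]. intros s; simpl; rewrite E; reflexivity.
Qed.

Lemma solves_Rneg_normal_form N phi lam w :
  solves Rneg (a_minus phi) (q_minus N phi) lam w <->
  solvesQ (fun t => Cmul (Copp (Cexpi (-2 * phi))) (Cadd lam (q_minus N phi (- t)))) (fun t => w (- t)).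
Proof.
unfold a_minus. replace (2 * phi) with (- (-2 * phi)) by ring.
split.
- intros [w1 [w2 H]]. exists (fun s => Copp (w1 (- s))), (fun s => w2 (- s)). intros t Ht.
  destruct (H (- t) ltac:(unfold Rneg; lra)) as [A [B C]]. split; [|split].
  + apply derivC_refl; auto.
  + apply derivC_refl'. exact B.
  + exact (proj1 (ode_normal_form_iff _ _ _ _ _) C).
- intros [u1 [u2 H]]. exists (fun s => Copp (u1 (- s))), (fun s => u2 (- s)). intros x Hx.
  unfold Rneg in Hx. destruct (H (- x) ltac:(lra)) as [A [B C]]. split; [|split].
  + apply (derivC_ext (fun s => w (- - s))). intros s. rewrite Ropp_involutive; reflexivity.
    apply (derivC_refl (fun s => w (- s))). exact A.
  + apply derivC_refl'. exact B.
  + apply (proj2 (ode_normal_form_iff _ _ _ _ _)). rewrite Ropp_involutive in C. exact C.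
Qed.

Definition limit_pointQ (Q : R -> Cx) : Prop :=
  (exists w, solvesQ Q w /\ L2_on Rpos w /\ (exists x, Rpos x /\ w x <> (0, 0)) /\
     forall v, solvesQ Q v -> L2_on Rpos v -> exists c : Cx, forall x, Rpos x -> v x = Cmul c (w x)) /\
  (exists v, solvesQ Q v /\ ~ L2_on Rpos v).

Lemma pow_ge_base t m : 1 <= t -> (1 <= m)%nat -> t <= t ^ m.
Proof.
intros Ht Hm. replace m with (S (m - 1)) by lia. change (t ^ S (m - 1)) with (t * t ^ (m - 1)).
assert (1 <= t ^ (m - 1)) by (apply pow_R1_Rle; lra). nra.
Qed.

(* The rotation z = z1 + i z2 = +-e^(-i psi) makes Re(z Q(t)) = |cos psi| t^m + O(1) tend to +oo;
   this is exactly where cos psi <> 0, i.e. phi not exceptional, is used. *)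
Lemma Qpot_rotation_positive m psi mu1 mu2 : (1 <= m)%nat -> cos psi <> 0 ->
  exists z1 z2 t0 dl, 1 <= t0 /\ 0 < dl /\ forall t, t0 <= t -> dl <= z1 /\
    dl <= z1 * fst (Qpot m (cos (2 * psi)) (sin (2 * psi)) mu1 mu2 t)
          - z2 * snd (Qpot m (cos (2 * psi)) (sin (2 * psi)) mu1 mu2 t).
Proof.
intros Hm Hc.
set (s := if Rlt_dec 0 (cos psi) then 1 else -1).
assert (Hs : 0 < s * cos psi).
{ unfold s. destruct (Rlt_dec 0 (cos psi)); [lra|]. assert (cos psi < 0) by lra. lra. }
assert (Hs2 : s * s = 1) by (unfold s; destruct (Rlt_dec 0 (cos psi)); ring).
set (z1 := s * cos psi). set (z2 := - s * sin psi).
set (bc := z1 * cos (2 * psi) - z2 * sin (2 * psi)).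
assert (Hbc : bc = s * cos psi).
{ unfold bc, z1, z2. rewrite cos_2a, sin_2a. pose proof (sin_sq_add_cos_sq psi).
  transitivity (s * cos psi * (sin psi * sin psi + cos psi * cos psi)); [ring|rewrite H; ring]. }
set (nu := z1 * mu1 - z2 * mu2).
set (dl := Rmin z1 1).
set (t0 := 1 + (1 + Rabs nu) / bc).
assert (Hbc0 : 0 < bc) by (rewrite Hbc; exact Hs).
assert (Ht0 : 1 <= t0) by (unfold t0; assert (0 <= (1 + Rabs nu) / bc)
  by (apply Rdiv_le_0_compat; pose proof (Rabs_pos nu); lra); lra).
assert (Hdl : 0 < dl) by (unfold dl; apply Rmin_glb_lt; unfold z1; lra).
assert (Hq : forall t, t0 <= t -> dl <= z1 /\
  dl <= z1 * fst (Qpot m (cos (2 * psi)) (sin (2 * psi)) mu1 mu2 t)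
        - z2 * snd (Qpot m (cos (2 * psi)) (sin (2 * psi)) mu1 mu2 t)).
{ intros t Ht. split. apply Rmin_l.
  unfold Qpot; cbn [fst snd].
  replace (z1 * (cos (2 * psi) * t ^ m + mu1) - z2 * (sin (2 * psi) * t ^ m + mu2)) with (bc * t ^ m + nu)
    by (unfold bc, nu; ring).
  assert (t <= t ^ m) by (apply pow_ge_base; [lra|exact Hm]).
  assert (bc * t <= bc * t ^ m) by (apply Rmult_le_compat_l; lra).
  assert (bc * t0 <= bc * t) by (apply Rmult_le_compat_l; lra).
  assert (bc * t0 = bc + 1 + Rabs nu) by (unfold t0; field; lra).
  pose proof (Rle_abs (- nu)). rewrite Rabs_Ropp in H3.
  assert (dl <= 1) by apply Rmin_r. lra. }
exists z1, z2, t0, dl. auto.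
Qed.

Lemma limit_pointQ_Qpot m psi mu1 mu2 : (1 <= m)%nat -> cos psi <> 0 ->
  limit_pointQ (Qpot m (cos (2 * psi)) (sin (2 * psi)) mu1 mu2).
Proof.
intros Hm Hc.
destruct (Qpot_rotation_positive m psi mu1 mu2 Hm Hc) as [z1 [z2 [t0 [dl [Ht0 [Hdl Hq]]]]]].
destruct (fundamental_system m (cos (2 * psi)) (sin (2 * psi)) mu1 mu2) as
  [y1 [y1p [y1pp [y2 [y2p [y2pp [Hy1 [Hy2 HW]]]]]]]].
split.
- destruct (LP_L2_exists m _ _ mu1 mu2 z1 z2 t0 dl Ht0 Hdl Hq y1 y1p y1pp y2 y2p y2pp Hy1 Hy2 HW) as
  [w [Sw [Lw [x [Hx Hwx]]]]].
  exists w. split; [auto|split; [auto|split]].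
  + exists x. split; auto.
  + intros v Sv Lv. destruct Sw as [w1 [w2 Sw]]. destruct Sv as [v1 [v2 Sv]].
    destruct (LP_unique m _ _ mu1 mu2 z1 z2 t0 dl Ht0 Hdl Hq v v1 v2 w w1 w2 Sv Sw Lv Lw
      (ex_intro _ x (conj Hx Hwx))) as [c Hc'].
    exists c. intros y Hy. apply Hc'. exact Hy.
- exact (LP_not_L2_exists m _ _ mu1 mu2 z1 z2 t0 dl Ht0 Hdl Hq y1 y1p y1pp y2 y2p y2pp Hy1 Hy2 HW).
Qed.

Lemma solvesQ_L2_limit_circle k mu1 mu2 w : (2 <= k)%nat -> solvesQ (Qpot (S k) (-1) 0 mu1 mu2) w
    -> L2_on Rpos w.
Proof. intros Hk [w1 [w2 H]]. exact (LC_L2 k mu1 mu2 w w1 w2 Hk H). Qed.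

Lemma limit_point_Rpos_of_Q a q lam Q : (forall w, solves Rpos a q lam w <-> solvesQ Q w) ->
  limit_pointQ Q -> limit_point Rpos a q lam.
Proof.
intros E [[w [Sw [Lw [Nz U]]]] [v [Sv Lv]]]. split.
- exists w. split; [apply E; auto|split; [auto|split; [auto|]]].
  intros v' Sv' Lv'. apply U; auto. apply E; auto.
- exists v. split; auto. apply E; auto.
Qed.

Lemma limit_point_Rneg_of_Q a q lam Q : (forall w, solves Rneg a q lam w <-> solvesQ Q (fun t => w (- t))) ->
  limit_pointQ Q -> limit_point Rneg a q lam.
Proof.
intros E [[w [Sw [Lw [[x0 [Hx0 Hw0]] U]]]] [v [Sv Lv]]].
assert (Inv : forall f : R -> Cx, (fun t => (fun s => f (- s)) (- t)) = f).
{ intros f. apply functional_extensionality. intros t. rewrite Ropp_involutive. reflexivity. }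
split.
- exists (fun s => w (- s)). split; [apply E; rewrite Inv; auto|split; [|split]].
  + apply L2_on_reflect. rewrite Inv. auto.
  + exists (- x0). split. unfold Rneg, Rpos in *; lra. rewrite Ropp_involutive. auto.
  + intros v' Sv' Lv'. apply E in Sv'. apply L2_on_reflect in Lv'.
    destruct (U _ Sv' Lv') as [c Hc]. exists c. intros x Hx.
    specialize (Hc (- x) ltac:(unfold Rneg, Rpos in *; lra)). rewrite Ropp_involutive in Hc. exact Hc.
- exists (fun s => v (- s)). split.
  + apply E. rewrite Inv. auto.
  + intros L. apply L2_on_reflect in L. rewrite Inv in L. auto.
Qed.

Lemma limit_circle_Rpos_of_Q a q lam Q : (forall w, solves Rpos a q lam w <-> solvesQ Q w) ->
  (forall w, solvesQ Q w -> L2_on Rpos w) -> limit_circle Rpos a q lam.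
Proof. intros E H w Sw. apply H, E, Sw. Qed.

Lemma limit_circle_Rneg_of_Q a q lam Q : (forall w, solves Rneg a q lam w <-> solvesQ Q (fun t => w (- t))) ->
  (forall w, solvesQ Q w -> L2_on Rpos w) -> limit_circle Rneg a q lam.
Proof. intros E H w Sw. apply L2_on_reflect. apply H, E, Sw. Qed.

Lemma cos_2kPI k : cos (2 * IZR k * PI) = 1 /\ sin (2 * IZR k * PI) = 0.
Proof.
assert (Hn : forall n : nat, cos (2 * INR n * PI) = 1 /\ sin (2 * INR n * PI) = 0).
{ intros n. pose proof (cos_period 0 n). pose proof (sin_period 0 n).
  rewrite Rplus_0_l in *. rewrite cos_0 in H. rewrite sin_0 in H0. auto. }
destruct k as [|p|p].
- simpl. rewrite Rmult_0_r, Rmult_0_l, cos_0, sin_0. auto.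
- replace (IZR (Z.pos p)) with (INR (Pos.to_nat p)) by (rewrite INR_IZR_INZ, positive_nat_Z; reflexivity).
  apply Hn.
- replace (IZR (Z.neg p)) with (- INR (Pos.to_nat p))
  by (rewrite <- Pos2Z.opp_pos, opp_IZR, INR_IZR_INZ, positive_nat_Z; reflexivity).
  replace (2 * - INR (Pos.to_nat p) * PI) with (- (2 * INR (Pos.to_nat p) * PI)) by ring.
  rewrite cos_neg, sin_neg. destruct (Hn (Pos.to_nat p)) as [A B]. rewrite A, B. split; ring.
Qed.

Lemma INR_N2 N : INR (N + 2) = INR N + 2.
Proof. rewrite plus_INR. simpl. ring. Qed.

Lemma IZR_N2k N k : IZR (Z.of_nat (N + 2) - k) = INR N + 2 - IZR k.
Proof. rewrite minus_IZR, <- INR_IZR_INZ, INR_N2. reflexivity. Qed.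

Section Reduction.
Variables (N : nat) (phi : R) (lam : Cx).
Hypothesis HN : (1 <= N)%nat.

Let m := (N + 2)%nat.
Let mu1_plus := fst (Copp (Cmul (Cexpi (2 * phi)) lam)).
Let mu2_plus := snd (Copp (Cmul (Cexpi (2 * phi)) lam)).
Let mu1_minus := fst (Copp (Cmul (Cexpi (-2 * phi)) lam)).
Let mu2_minus := snd (Copp (Cmul (Cexpi (-2 * phi)) lam)).
Let th_plus := 2 * phi + (INR (N + 2) * (PI / 2) + INR (N + 2) * phi).
Let th_minus := -2 * phi + (INR (N + 2) * (3 * (PI / 2)) - INR (N + 2) * phi).

Lemma solves_Rpos_iff_Qpot w : solves Rpos (a_plus phi) (q_plus N phi) lam w
    <-> solvesQ (Qpot m (- cos th_plus) (- sin th_plus) mu1_plus mu2_plus) w.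
Proof.
rewrite solves_Rpos_normal_form.
assert (E : forall t, Cmul (Copp (Cexpi (2 * phi))) (Cadd lam (q_plus N phi t))
  = Qpot m (- cos th_plus) (- sin th_plus) mu1_plus mu2_plus t).
{ intros t. rewrite q_plus_polar, Cexpi_Qpot. reflexivity. }
split; apply solvesQ_ext; intros t; rewrite E; reflexivity.
Qed.

Lemma solves_Rneg_iff_Qpot w : solves Rneg (a_minus phi) (q_minus N phi) lam w
    <-> solvesQ (Qpot m (- cos th_minus) (- sin th_minus) mu1_minus mu2_minus) (fun t => w (- t)).
Proof.
rewrite solves_Rneg_normal_form.
assert (E : forall t, Cmul (Copp (Cexpi (-2 * phi))) (Cadd lam (q_minus N phi (- t)))
  = Qpot m (- cos th_minus) (- sin th_minus) mu1_minus mu2_minus t).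
{ intros t. rewrite q_minus_polar, Cexpi_Qpot. reflexivity. }
split; apply solvesQ_ext; intros t; rewrite E; reflexivity.
Qed.

Lemma limit_pointQ_of_angle th mu1 mu2 : cos ((th + PI) / 2) <> 0
    -> limit_pointQ (Qpot m (- cos th) (- sin th) mu1 mu2).
Proof.
intros H. pose proof (limit_pointQ_Qpot m ((th + PI) / 2) mu1 mu2 ltac:(unfold m; lia) H) as L.
replace (2 * ((th + PI) / 2)) with (th + PI) in L by field.
rewrite neg_cos, neg_sin in L. exact L.
Qed.

Lemma L2_of_angle_2kPI th k mu1 mu2 w : th = 2 * IZR k * PI
    -> solvesQ (Qpot m (- cos th) (- sin th) mu1 mu2) w -> L2_on Rpos w.
Proof.
intros E HS. rewrite E in HS. destruct (cos_2kPI k) as [A B]. rewrite A, B, Ropp_0 in HS.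
replace (- (1)) with (-1) in HS by ring.
unfold m in HS. replace (N + 2)%nat with (S (N + 1)) in HS by lia.
apply (solvesQ_L2_limit_circle (N + 1) mu1 mu2 w); auto. lia.
Qed.

Lemma angle_plus_nonexceptional : ~ exceptional N phi -> cos ((th_plus + PI) / 2) <> 0.
Proof.
intros Hne Hc. apply Hne. destruct (cos_eq_0_0 _ Hc) as [k Hk]. exists k.
pose proof (pos_INR N). unfold th_plus in Hk. rewrite INR_N2 in Hk.
assert (E : (INR N + 4) * phi = 2 * IZR k * PI - (INR N + 2) * (PI / 2)) by lra.
apply (Rmult_eq_reg_l (INR N + 4)); [|lra]. rewrite E. field. lra.
Qed.

Lemma angle_minus_nonexceptional : ~ exceptional N phi -> cos ((th_minus + PI) / 2) <> 0.
Proof.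
intros Hne Hc. apply Hne. destruct (cos_eq_0_0 _ Hc) as [j Hj]. exists (Z.of_nat (N + 2) - j)%Z.
pose proof (pos_INR N). unfold th_minus in Hj. rewrite INR_N2 in Hj. rewrite IZR_N2k.
assert (E : (INR N + 4) * phi = 3 * (INR N + 2) * (PI / 2) - 2 * IZR j * PI) by lra.
apply (Rmult_eq_reg_l (INR N + 4)); [|lra]. rewrite E. field. lra.
Qed.

Lemma angle_plus_exceptional : exceptional N phi -> exists k, th_plus = 2 * IZR k * PI.
Proof.
intros [k Hk]. exists k. pose proof (pos_INR N). unfold th_plus. rewrite INR_N2, Hk. field. lra.
Qed.

Lemma angle_minus_exceptional : exceptional N phi -> exists k, th_minus = 2 * IZR k * PI.
Proof.
intros [k Hk]. exists (Z.of_nat (N + 2) - k)%Z. pose proof (pos_INR N).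
unfold th_minus. rewrite IZR_N2k, INR_N2, Hk. field. lra.
Qed.

End Reduction.

Theorem theorem1 (N : nat) (phi : R) (lam : Cx) :
  (1 <= N)%nat -> - PI / 2 < phi < PI / 2 ->
  ((~ exceptional N phi ->
      limit_point Rpos (a_plus phi) (q_plus N phi) lam /\
      limit_point Rneg (a_minus phi) (q_minus N phi) lam) /\
   (exceptional N phi ->
      limit_circle Rpos (a_plus phi) (q_plus N phi) lam /\
      limit_circle Rneg (a_minus phi) (q_minus N phi) lam)).
Proof.
intros HN _.
split.
- intros Hne. split.
  + apply (limit_point_Rpos_of_Q _ _ _ _ (solves_Rpos_iff_Qpot N phi lam)).
    apply (limit_pointQ_of_angle N HN), angle_plus_nonexceptional, Hne.
  + apply (limit_point_Rneg_of_Q _ _ _ _ (solves_Rneg_iff_Qpot N phi lam)).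
    apply (limit_pointQ_of_angle N HN), angle_minus_nonexceptional, Hne.
- intros He. split.
  + apply (limit_circle_Rpos_of_Q _ _ _ _ (solves_Rpos_iff_Qpot N phi lam)).
    destruct (angle_plus_exceptional N phi He) as [k Hk].
    intros w. exact (L2_of_angle_2kPI N HN _ k _ _ w Hk).
  + apply (limit_circle_Rneg_of_Q _ _ _ _ (solves_Rneg_iff_Qpot N phi lam)).
    destruct (angle_minus_exceptional N phi He) as [k Hk].
    intros w. exact (L2_of_angle_2kPI N HN _ k _ _ w Hk).
Qed.
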